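(* Let $T$ be a complete first-order theory with monster model $\mathcal{U}$. The relation $\geq_{\mathbb{E}}$ on the collection of global Keisler measures (in finitely many variables) is a preorder; that is, for all global Keisler measures $\mu,\nu,\eta$: $\mu\geq_{\mathbb{E}}\mu$, and if $\mu\geq_{\mathbb{E}}\nu$ and $\nu\geq_{\mathbb{E}}\eta$ then $\mu\geq_{\mathbb{E}}\eta$.
   Context: ''Small'' means of cardinality less than the saturation of $\mathcal{U}$. For $B\subseteq\mathcal{U}$ and a finite tuple of variables $x$, $\mathcal{L}_x(B)$ is the Boolean algebra of formulas in free variables $x$ with parameters from $B$ modulo $T$-equivalence; $\mathcal{L}_x(B)$ is identified with a subalgebra of $\mathcal{L}_{xy}(B)$ via $\varphi(x)\mapsto\varphi(x)\wedge y=y$. A Keisler measure over $B$ in $x$ is a finitely additive probability measure on $\mathcal{L}_x(B)$; $\mathfrak{M}_x(B)$ denotes the set of these; global means over $\mathcal{U}$. For $\omega\in\mathfrak{M}_{xy}(B)$, $\pi_x(\omega)(\varphi(x))=\omega(\varphi(x)\wedge y=y)$ (similarly $\pi_y$), and $\omega|_C$ is restriction to $\mathcal{L}_{xy}(C)$. For $\mu\in\mathfrak{M}_x(\mathcal{U})$, $\nu\in\mathfrak{M}_y(\mathcal{U})$ ($x,y$ disjoint) and small $A$: $\mu\geq_{\mathbb{E},A}\nu$ means there is $\lambda\in\mathfrak{M}_{xy}(A)$ with $\pi_x(\lambda)=\mu|_A$ such that every $\omega\in\mathfrak{M}_{xy}(\mathcal{U})$ with $\omega|_A=\lambda$ and $\pi_x(\omega)=\mu$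 satisfies $\pi_y(\omega)=\nu$. $\mu\geq_{\mathbb{E}}\nu$ means $\mu\geq_{\mathbb{E},A}\nu$ for some small $A$. As a relation on global measures, $\mu\geq_{\mathbb{E}}\nu$ is evaluated after writing $\mu$ and $\nu$ in distinct (disjoint) tuples of variables (so in particular $\mu\geq_{\mathbb{E}}\mu$ means $\mu(x)\geq_{\mathbb{E}}\mu(y)$ for a copy $y$ of $x$). *)

From Stdlib Require Import Reals List.
From Stdlib Require Fin.
Open Scope R_scope.

Set Implicit Arguments.

Record signature := Signature {
  funcs : Type; rels : Type;
  farity : funcs -> nat; rarity : rels -> nat }.

Record structure (L : signature) := Structure {
  carrier :> Type;
  carrier_inhabited : inhabited carrier;
  funI : forall f : funcs L, (Fin.t (farity L f) -> carrier) -> carrier;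
  relI : forall r : rels L, (Fin.t (rarity L r) -> carrier) -> Prop }.

Section FOL.
Variable L : signature.
Variable U : structure L.

Inductive term : Type :=
| tvar : nat -> term
| tpar : U -> term
| tapp : forall f : funcs L, (Fin.t (farity L f) -> term) -> term.

Inductive formula : Type :=
| fFalse : formula
| fEq : term -> term -> formula
| fRel : forall r : rels L, (Fin.t (rarity L r) -> term) -> formula
| fNeg : formula -> formula
| fAnd : formula -> formula -> formula
| fEx : formula -> formula.   (* binds de Bruijn variable 0 *)

Definition fTrue := fNeg fFalse.
Definition fOr (p q : formula) := fNeg (fAnd (fNeg p) (fNeg q)).

Definition scons (m : U) (a : nat -> U) : nat -> U :=
  fun i => match i with 0 => m | S i => a i end.

Fixpoint teval (a : nat -> U) (t : term) : U :=
  match t with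
  | tvar i => a i
  | tpar c => c
  | tapp f args => funI U f (fun j => teval a (args j))
  end.

Fixpoint sat (a : nat -> U) (p : formula) : Prop :=
  match p with
  | fFalse => False
  | fEq t1 t2 => teval a t1 = teval a t2
  | fRel r args => relI U r (fun j => teval a (args j))
  | fNeg q => ~ sat a q
  | fAnd q1 q2 => sat a q1 /\ sat a q2
  | fEx q => exists m, sat (scons m a) q
  end.

Fixpoint tbound (k : nat) (t : term) : Prop :=
  match t with
  | tvar i => (i < k)%nat
  | tpar _ => True
  | tapp f args => forall j, tbound k (args j)
  end.

Fixpoint fbound (k : nat) (p : formula) : Prop :=
  match p with
  | fFalse => True
  | fEq t1 t2 => tbound k t1 /\ tbound k t2
  | fRel r args => forall j, tbound k (args j)
  | fNeg q => fbound k q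
  | fAnd q1 q2 => fbound k q1 /\ fbound k q2
  | fEx q => fbound (S k) q
  end.

Fixpoint tparams (B : U -> Prop) (t : term) : Prop :=
  match t with
  | tvar _ => True
  | tpar c => B c
  | tapp f args => forall j, tparams B (args j)
  end.

Fixpoint fparams (B : U -> Prop) (p : formula) : Prop :=
  match p with
  | fFalse => True
  | fEq t1 t2 => tparams B t1 /\ tparams B t2
  | fRel r args => forall j, tparams B (args j)
  | fNeg q => fparams B q
  | fAnd q1 q2 => fparams B q1 /\ fparams B q2
  | fEx q => fparams B q
  end.

Fixpoint tmap (g : U -> U) (t : term) : term :=
  match t with
  | tvar i => tvar i
  | tpar c => tpar (g c)
  | tapp f args => tapp f (fun j => tmap g (args j))
  end.

Fixpoint fmap (g : U -> U) (p : formula) : formula :=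
  match p with
  | fFalse => fFalse
  | fEq t1 t2 => fEq (tmap g t1) (tmap g t2)
  | fRel r args => fRel r (fun j => tmap g (args j))
  | fNeg q => fNeg (fmap g q)
  | fAnd q1 q2 => fAnd (fmap g q1) (fmap g q2)
  | fEx q => fEx (fmap g q)
  end.

Fixpoint tlift (c k : nat) (t : term) : term :=
  match t with
  | tvar i => tvar (if Nat.ltb i c then i else i + k)
  | tpar x => tpar x
  | tapp f args => tapp f (fun j => tlift c k (args j))
  end.

Fixpoint flift (c k : nat) (p : formula) : formula :=
  match p with
  | fFalse => fFalse
  | fEq t1 t2 => fEq (tlift c k t1) (tlift c k t2)
  | fRel r args => fRel r (fun j => tlift c k (args j))
  | fNeg q => fNeg (flift c k q)
  | fAnd q1 q2 => fAnd (flift c k q1) (flift c k q2)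
  | fEx q => fEx (flift (S c) k q)
  end.

(** [LF B n p]: p is a formula in the variables x = (0,...,n-1)
    with parameters from B, i.e. a representative of an element of L_x(B). *)
Definition LF (B : U -> Prop) (n : nat) (p : formula) : Prop :=
  fbound n p /\ fparams B p.

(** T-equivalence (T = Th(U) complete, so equivalence in U). *)
Definition fequiv (p q : formula) : Prop := forall a, sat a p <-> sat a q.

Definition allU : U -> Prop := fun _ => True.

(** Keisler measure over B in n variables: a finitely additive probability
    measure on L_x(B), presented as a function on representing formulas
    which is invariant under T-equivalence. *)
Definition isKM (B : U -> Prop) (n : nat) (mu : formula -> R) : Prop :=
  (forall p q, LF B n p -> LF B n q -> fequiv p q -> mu p = mu q) /\
  (forall p, LF B n p -> 0 <= mu p) /\
  mu fTrue = 1 /\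
  (forall p q, LF B n p -> LF B n q -> (forall a, ~ (sat a p /\ sat a q)) ->
     mu (fOr p q) = mu p + mu q).

(** Smallness relative to a cardinal kappa, represented by a type K:
    |A| < |K|. *)
Definition small (K : Type) (A : U -> Prop) : Prop :=
  (exists f : {x | A x} -> K, forall u v, f u = f v -> u = v) /\
  ~ (exists g : K -> {x | A x}, forall u v, g u = g v -> u = v).

Definition saturated (K : Type) : Prop :=
  forall A, small K A ->
  forall P : formula -> Prop,
    (forall p, P p -> LF A 1 p) ->
    (forall l : list formula, (forall p, In p l -> P p) ->
       exists b : U, forall p, In p l -> sat (fun _ => b) p) ->
    exists b : U, forall p, P p -> sat (fun _ => b) p.

Definition automorphism (s : U -> U) : Prop :=
  (forall x y, s x = s y -> x = y) /\ (forall y, exists x, s x = y) /\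
  (forall f args, s (funI U f args) = funI U f (fun j => s (args j))) /\
  (forall r args, relI U r args <-> relI U r (fun j => s (args j))).

Definition homogeneous (K : Type) : Prop :=
  forall (A : U -> Prop) (g : U -> U), small K A ->
    (forall p, fbound 0 p -> fparams A p ->
       forall e, sat e p <-> sat e (fmap g p)) ->
    exists s, automorphism s /\ forall x, A x -> s x = g x.

(** kappa > |T| = |L| + aleph_0 *)
Definition big (K : Type) : Prop :=
  (exists f : (nat + funcs L + rels L)%type -> K, forall u v, f u = f v -> u = v) /\
  ~ (exists g : K -> (nat + funcs L + rels L)%type, forall u v, g u = g v -> u = v).

Definition monster (K : Type) : Prop :=
  big K /\ saturated K /\ homogeneous K.

(** mu >=_{E,A} nu, with mu in the variables x = (0..n-1) and nu written in
    the disjoint tuple y = (n..n+m-1) (nu's own variables 0..m-1 are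
    shifted by n). *)
Definition geE_at (A : U -> Prop) (n m : nat) (mu nu : formula -> R) : Prop :=
  exists lam : formula -> R,
    isKM A (n + m) lam /\
    (forall p, LF A n p -> lam p = mu p) /\
    forall om : formula -> R,
      isKM allU (n + m) om ->
      (forall p, LF A (n + m) p -> om p = lam p) ->
      (forall p, LF allU n p -> om p = mu p) ->
      (forall q, LF allU m q -> om (flift 0 n q) = nu q). (* pi_y(om) = nu *)

Definition geE (K : Type) (n m : nat) (mu nu : formula -> R) : Prop :=
  exists A : U -> Prop, small K A /\ geE_at A n m mu nu.

End FOL.

(* Reflexivity: over the empty set, the push-forward of [mu] along the
   diagonal [y = x] is a witness, because every global extension of it gives
   the diagonal measure 1 and hence identifies its two marginals.

   Transitivity: let [lam1] over [A] witness [mu >= nu] and [lam2] over [B]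
   witness [nu >= eta]. Extend both to global measures with marginals [mu] and
   [nu], glue these along their common [y]-marginal [nu] into [rho] in
   [xyz], and let [lam] be the [xz]-part of [rho] over [A ∪ B], which is
   small since an infinite cardinal absorbs finite sums. If [om] in [xz]
   extends [lam] and has [x]-marginal [mu], amalgamate [om] with [rho] into a
   measure in [xyz]: the witness property of [lam1] forces its [y]-marginal to
   be [nu], and then that of [lam2] forces its [z]-marginal, which is the one
   of [om], to be [eta].

   Every extension above is one amalgamation lemma for finitely additive
   measures, proved by Hahn-Banach: a measure on formulas depending only on
   some coordinates and a measure on another algebra closed under universal
   quantification of the other coordinates have a common extension as soon
   as they agree on the intersection. The required domination inequality
   follows by replacing a simple function by its infimum over the hidden
   coordinates, which is again a simple function. *)

From Stdlib Require Import Reals Lra Lia List Classical ClassicalEpsilon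
  FunctionalExtensionality ProofIrrelevance.
From mathcomp Require classical_sets boolp.

Set Bullet Behavior "Strict Subproofs".

(** * Renaming, lifting and blocks of quantifiers *)

Section Syntax.
Context {L : signature} {U : structure L}.

Definition up_ren (f : nat -> nat) (i : nat) : nat :=
  match i with 0 => 0 | S i => S (f i) end.

Fixpoint trename (f : nat -> nat) (t : term U) : term U :=
  match t with
  | tvar i => tvar U (f i)
  | tpar c => tpar U c
  | tapp g args => tapp g (fun j => trename f (args j))
  end.

Fixpoint frename (f : nat -> nat) (p : formula U) : formula U :=
  match p with
  | fFalse => fFalse U
  | fEq t1 t2 => fEq (trename f t1) (trename f t2)
  | fRel r args => fRel r (fun j => trename f (args j))
  | fNeg q => fNeg (frename f q)
  | fAnd q1 q2 => fAnd (frename f q1) (frename f q2)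
  | fEx q => fEx (frename (up_ren f) q)
  end.

Lemma teval_rename f (a : nat -> U) t :
  teval a (trename f t) = teval (fun i => a (f i)) t.
Proof.
  induction t; simpl; auto.
  f_equal; apply functional_extensionality; auto.
Qed.

Lemma sat_rename p : forall f (a : nat -> U),
  sat a (frename f p) <-> sat (fun i => a (f i)) p.
Proof.
  induction p; intros f a; simpl.
  - tauto.
  - rewrite !teval_rename; tauto.
  - replace (fun j => teval a (trename f (t j)))
      with (fun j => teval (fun i => a (f i)) (t j)); [tauto|].
    apply functional_extensionality; intro; now rewrite teval_rename.
  - now rewrite IHp.
  - now rewrite IHp1, IHp2.
  - assert (E : forall m, (fun i => scons U m a (up_ren f i))
                        = scons U m (fun i => a (f i)))
      by (intro; apply functional_extensionality; now intros []).
    split; intros [m Hm]; exists m; [rewrite IHp, E in Hm | rewrite IHp, E]; auto.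
Qed.

Lemma tbound_rename (t : term U) f M N : (forall i, i < M -> f i < N)%nat ->
  tbound M t -> tbound N (trename f t).
Proof. induction t; simpl; auto. Qed.

Lemma fbound_rename (p : formula U) : forall f M N, (forall i, i < M -> f i < N)%nat ->
  fbound M p -> fbound N (frename f p).
Proof.
  induction p; intros f M N Hf Hb; simpl in *; eauto.
  - destruct Hb; split; eapply tbound_rename; eauto.
  - intro; eapply tbound_rename; eauto.
  - destruct Hb; split; eauto.
  - eapply IHp; [|exact Hb]. intros [|i] Hi; simpl; [lia|]. specialize (Hf i); lia.
Qed.

Lemma tparams_rename (B : U -> Prop) (t : term U) f : tparams B t -> tparams B (trename f t).
Proof. induction t; simpl; auto. Qed.

Lemma fparams_rename (B : U -> Prop) (p : formula U) :
  forall f, fparams B p -> fparams B (frename f p).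
Proof.
  induction p; intros f H; simpl in *; auto using tparams_rename.
  - destruct H; auto using tparams_rename.
  - destruct H; auto.
Qed.

Definition shift_ren (c k i : nat) : nat := if Nat.ltb i c then i else i + k.

Lemma flift_rename (p : formula U) : forall c k, flift c k p = frename (shift_ren c k) p.
Proof.
  assert (Ht : forall (t : term U) c k, tlift c k t = trename (shift_ren c k) t).
  { induction t; intros; simpl; auto. f_equal; apply functional_extensionality; auto. }
  induction p; intros c k; simpl; rewrite ?Ht, ?IHp, ?IHp1, ?IHp2; auto.
  - f_equal; apply functional_extensionality; auto.
  - do 2 f_equal. apply functional_extensionality; intros []; unfold shift_ren; simpl; auto.
    destruct (Nat.ltb_spec n c), (Nat.ltb_spec (S n) (S c)); lia.
Qed.

Lemma sat_lift p c k (a : nat -> U) :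
  sat a (flift c k p) <-> sat (fun i => a (shift_ren c k i)) p.
Proof. rewrite flift_rename; apply sat_rename. Qed.

Lemma fbound_lift (p : formula U) c k N : fbound N p -> fbound (N + k) (flift c k p).
Proof.
  rewrite flift_rename; apply fbound_rename.
  intros i Hi; unfold shift_ren; destruct (Nat.ltb_spec i c); lia.
Qed.

Lemma fparams_lift (B : U -> Prop) (p : formula U) c k : fparams B p -> fparams B (flift c k p).
Proof. rewrite flift_rename; apply fparams_rename. Qed.

Lemma teval_ext N t (a b : nat -> U) : tbound N t ->
  (forall i, i < N -> a i = b i)%nat -> teval a t = teval b t.
Proof.
  induction t; simpl; intros Hb Hab; auto.
  f_equal; apply functional_extensionality; auto.
Qed.

Lemma sat_ext p : forall N (a b : nat -> U), fbound N p ->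
  (forall i, i < N -> a i = b i)%nat -> (sat a p <-> sat b p).
Proof.
  induction p; intros N a b Hb Hab; simpl in *.
  - tauto.
  - destruct Hb as [H1 H2].
    now rewrite (teval_ext _ _ _ _ H1 Hab), (teval_ext _ _ _ _ H2 Hab).
  - replace (fun j => teval a (t j)) with (fun j => teval b (t j)); [tauto|].
    apply functional_extensionality; intro j; symmetry; eapply teval_ext; eauto.
  - now rewrite (IHp N a b).
  - destruct Hb; now rewrite (IHp1 N a b), (IHp2 N a b).
  - assert (E : forall m, sat (scons U m a) p <-> sat (scons U m b) p).
    { intro m; apply (IHp (S N)); auto. intros [|i] Hi; simpl; auto; apply Hab; lia. }
    split; intros [m Hm]; exists m; apply E; auto.
Qed.

Lemma sat_pointwise (a b : nat -> U) p : (forall i, a i = b i) -> (sat a p <-> sat b p).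
Proof. intro H; replace b with a; [tauto|]. now apply functional_extensionality. Qed.

Lemma fbound_mono (p : formula U) : forall N M, fbound N p -> (N <= M)%nat -> fbound M p.
Proof.
  assert (Ht : forall (t : term U) N M, tbound N t -> (N <= M)%nat -> tbound M t).
  { induction t; simpl; intros; eauto; lia. }
  induction p; simpl; intros N M H Hle; eauto.
  - destruct H; split; eauto.
  - destruct H; split; eauto.
  - eapply IHp; eauto; lia.
Qed.

Lemma fparams_mono (B C : U -> Prop) p : (forall x, B x -> C x) ->
  fparams B p -> fparams C p.
Proof.
  intro HBC.
  assert (Ht : forall t : term U, tparams B t -> tparams C t) by (induction t; simpl; auto).
  induction p; simpl; intuition auto.
Qed.

Lemma fparams_allU p : fparams (allU U) p.
Proof.
  assert (Ht : forall t : term U, tparams (allU U) t) by (induction t; simpl; auto; exact I).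
  induction p; simpl; auto.
Qed.

Lemma LF_mono (B C : U -> Prop) n N p : (forall x, B x -> C x) -> (n <= N)%nat ->
  LF B n p -> LF C N p.
Proof. intros HBC Hn [Hb Hp]; split; [eapply fbound_mono | eapply fparams_mono]; eauto. Qed.

Lemma LF_allU (B : U -> Prop) n p : LF B n p -> LF (allU U) n p.
Proof. intros [Hb _]; split; auto using fparams_allU. Qed.

Lemma LF_lift (B : U -> Prop) n c k p : LF B n p -> LF B (n + k) (flift c k p).
Proof. intros [Hb Hp]; split; auto using fbound_lift, fparams_lift. Qed.

Fixpoint fExN (m : nat) (p : formula U) : formula U :=
  match m with 0 => p | S m => fExN m (fEx p) end.

Definition fAllN (m : nat) (p : formula U) : formula U := fNeg (fExN m (fNeg p)).

Definition prepend (m : nat) (b a : nat -> U) (i : nat) : U :=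
  if Nat.ltb i m then b i else a (i - m)%nat.

Lemma sat_fExN m : forall p (a : nat -> U),
  sat a (fExN m p) <-> exists b, sat (prepend m b a) p.
Proof.
  induction m; intros p a; simpl.
  - assert (E : forall b, prepend 0 b a = a).
    { intro b; apply functional_extensionality; intro i; unfold prepend; simpl.
      now rewrite Nat.sub_0_r. }
    split; [intro H; exists a | intros [b Hb]]; rewrite ?E in *; auto.
  - rewrite IHm. simpl.
    assert (E : forall b c, scons U c (prepend m b a) = prepend (S m) (scons U c b) a).
    { intros b c; apply functional_extensionality; intros [|i]; unfold prepend; simpl; auto. }
    split.
    + intros [b [c Hc]]. exists (scons U c b). now rewrite <- E.
    + intros [b Hb]. exists (fun j => b (S j)), (b 0%nat). rewrite E.
      replace (scons U (b 0%nat) (fun j => b (S j))) with b; auto.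
      apply functional_extensionality; now intros [].
Qed.

Lemma sat_fAllN m p (a : nat -> U) :
  sat a (fAllN m p) <-> forall b, sat (prepend m b a) p.
Proof.
  unfold fAllN; simpl; rewrite sat_fExN; simpl.
  split; [intros H b; apply NNPP; eauto | intros H [b Hb]; auto].
Qed.

Lemma fbound_fExN m : forall (p : formula U) N, fbound (m + N) p -> fbound N (fExN m p).
Proof. induction m; intros p N H; simpl; auto. Qed.

Lemma fparams_fExN (B : U -> Prop) m : forall p, fparams B p -> fparams B (fExN m p).
Proof. induction m; intros p H; simpl; auto. Qed.

(** Quantifying the block of variables [n, n+m): the variables below the
    block keep their index and those above it are lowered by [d]. *)
Definition block_ren (n m d i : nat) : nat :=
  if Nat.ltb i n then (m + i)%nat
  else if Nat.ltb i (n + m) then (i - n)%nat else (m + (i - d))%nat.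

Definition fAll_over (n m d : nat) (p : formula U) : formula U :=
  fAllN m (frename (block_ren n m d) p).

Definition fill_block (n m d : nat) (a b : nat -> U) (i : nat) : U :=
  if Nat.ltb i n then a i else if Nat.ltb i (n + m) then b (i - n)%nat else a (i - d)%nat.

Lemma sat_fAll_over n m d p (a : nat -> U) :
  sat a (fAll_over n m d p) <-> forall b, sat (fill_block n m d a b) p.
Proof.
  unfold fAll_over; rewrite sat_fAllN.
  enough (E : forall b, (fun i => prepend m b a (block_ren n m d i)) = fill_block n m d a b).
  { split; intros H b; specialize (H b); rewrite sat_rename, E in *; auto. }
  intro b; apply functional_extensionality; intro i.
  unfold prepend, block_ren, fill_block.
  destruct (Nat.ltb_spec i n); [|destruct (Nat.ltb_spec i (n + m))].
  - destruct (Nat.ltb_spec (m + i) m); [lia|]. f_equal; lia.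
  - destruct (Nat.ltb_spec (i - n) m); [auto|lia].
  - destruct (Nat.ltb_spec (m + (i - d)) m); [lia|]. f_equal; lia.
Qed.

Lemma LF_fAll_over (B : U -> Prop) n m d N N' p :
  (forall i, i < N -> i < n -> i < N')%nat ->
  (forall i, i < N -> n + m <= i -> i - d < N')%nat ->
  LF B N p -> LF B N' (fAll_over n m d p).
Proof.
  intros Hlo Hhi [Hb Hp]; split.
  - apply fbound_fExN. eapply fbound_rename; [|exact Hb].
    intros i Hi; unfold block_ren.
    destruct (Nat.ltb_spec i n); [specialize (Hlo i); lia|].
    destruct (Nat.ltb_spec i (n + m)); [lia|]. specialize (Hhi i); lia.
  - now apply fparams_fExN, fparams_rename.
Qed.

Definition agree_on (P : nat -> Prop) (a b : nat -> U) : Prop := forall i, P i -> a i = b i.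

Definition depends_only (P : nat -> Prop) (p : formula U) : Prop :=
  forall a b : nat -> U, agree_on P a b -> (sat a p <-> sat b p).

Lemma depends_only_fbound N (p : formula U) : fbound N p -> depends_only (fun i => i < N)%nat p.
Proof. intros Hb a b Hab; now apply (sat_ext p N a b Hb). Qed.

Definition fAll_block (n m : nat) : formula U -> formula U := fAll_over n m 0.

Lemma sat_fAll_block n m p (a : nat -> U) :
  sat a (fAll_block n m p) <->
  forall a', agree_on (fun i => i < n \/ n + m <= i)%nat a a' -> sat a' p.
Proof.
  unfold fAll_block; rewrite sat_fAll_over. split.
  - intros H a' Ha'. specialize (H (fun j => a' (n + j)%nat)).
    refine (proj1 (sat_pointwise _ _ p _) H). intro i; unfold fill_block.
    destruct (Nat.ltb_spec i n); [apply Ha'; lia|].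
    destruct (Nat.ltb_spec i (n + m)); [f_equal; lia|]. rewrite Nat.sub_0_r; apply Ha'; lia.
  - intros H b; apply H. intros i Hi; unfold fill_block.
    destruct (Nat.ltb_spec i n); auto. destruct (Nat.ltb_spec i (n + m)); [lia|].
    now rewrite Nat.sub_0_r.
Qed.

Definition fAll_mid (n m : nat) : formula U -> formula U := fAll_over n m m.

Lemma sat_fAll_mid n m p (a : nat -> U) :
  depends_only (fun i => i < n \/ n + m <= i)%nat p ->
  (sat a (fAll_mid n m p) <-> sat (fun i => a (if Nat.ltb i n then i else i - m)%nat) p).
Proof.
  intro Hp; unfold fAll_mid; rewrite sat_fAll_over.
  assert (E : forall b, sat (fill_block n m m a b) p <->
                        sat (fun i => a (if Nat.ltb i n then i else i - m)%nat) p).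
  { intro b; apply Hp. intros i Hi; unfold fill_block.
    destruct (Nat.ltb_spec i n); auto. destruct (Nat.ltb_spec i (n + m)); [lia|auto]. }
  split; [intro H; apply (E a) | intros H b; apply E]; auto.
Qed.

Definition fAll_low (n : nat) : formula U -> formula U := fAll_over 0 n n.

Lemma sat_fAll_low n p (a : nat -> U) :
  depends_only (fun i => n <= i)%nat p ->
  (sat a (fAll_low n p) <-> sat (fun i => a (i - n)%nat) p).
Proof.
  intro Hp; unfold fAll_low; rewrite sat_fAll_over.
  assert (E : forall b, sat (fill_block 0 n n a b) p <-> sat (fun i => a (i - n)%nat) p).
  { intro b; apply Hp. intros i Hi; unfold fill_block; simpl.
    destruct (Nat.ltb_spec i n); [lia|auto]. }
  split; [intro H; apply (E a) | intros H b; apply E]; auto.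
Qed.

Lemma depends_only_mono (P Q : nat -> Prop) (p : formula U) :
  (forall i, P i -> Q i) -> depends_only P p -> depends_only Q p.
Proof. intros HPQ Hp a b Hab; apply Hp; intros i Hi; auto. Qed.

Lemma depends_only_lift c k (q : formula U) :
  depends_only (fun i => i < c \/ c + k <= i)%nat (flift c k q).
Proof.
  intros a b Hab. rewrite !sat_lift. apply sat_pointwise. intro i.
  apply Hab; unfold shift_ren; destruct (Nat.ltb_spec i c); lia.
Qed.

Lemma depends_only_lift_low n (q : formula U) :
  depends_only (fun i => n <= i)%nat (flift 0 n q).
Proof.
  eapply depends_only_mono; [|apply depends_only_lift]. intros i [Hi|Hi]; lia.
Qed.

Lemma fAll_low_lift_equiv n (q : formula U) : fequiv (fAll_low n (flift 0 n q)) q.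
Proof.
  intro a. rewrite sat_fAll_low by apply depends_only_lift_low.
  rewrite sat_lift; apply sat_pointwise; intro i; unfold shift_ren; simpl. f_equal; lia.
Qed.

Lemma lift_bounded_equiv n m (p : formula U) : fbound n p -> fequiv (flift n m p) p.
Proof.
  intros Hb a. rewrite sat_lift. apply (sat_ext p n); auto.
  intros i Hi; unfold shift_ren; destruct (Nat.ltb_spec i n); [auto|lia].
Qed.

Lemma lift_lift_equiv n m (r : formula U) :
  fequiv (flift n m (flift 0 n r)) (flift 0 n (flift 0 m r)).
Proof.
  intro a. rewrite !sat_lift. apply sat_pointwise. intro i.
  unfold shift_ren; simpl. destruct (Nat.ltb_spec (i + n) n); [lia|]. f_equal; lia.
Qed.

Lemma fAll_mid_lift_equiv n m (q : formula U) : fequiv (fAll_mid n m (flift n m q)) q.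
Proof.
  intro a. rewrite sat_fAll_mid by apply depends_only_lift. rewrite sat_lift.
  apply sat_pointwise; intro i; unfold shift_ren.
  destruct (Nat.ltb_spec i n); [now destruct (Nat.ltb_spec i n); [|lia]|].
  destruct (Nat.ltb_spec (i + m) n); [lia|]. f_equal; lia.
Qed.

Lemma lift_fAll_mid_equiv n m (p : formula U) :
  depends_only (fun i => i < n \/ n + m <= i)%nat p -> fequiv (flift n m (fAll_mid n m p)) p.
Proof.
  intros Hp a. rewrite sat_lift, sat_fAll_mid by auto. apply Hp. intros i Hi.
  unfold shift_ren. destruct (Nat.ltb_spec i n).
  - now destruct (Nat.ltb_spec i n); [|lia].
  - destruct (Nat.ltb_spec (i - m) n); [lia|]. f_equal; lia.
Qed.

Lemma lift_fAll_low_equiv n (p : formula U) :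
  depends_only (fun i => n <= i)%nat p -> fequiv (flift 0 n (fAll_low n p)) p.
Proof.
  intros Hp a. rewrite sat_lift, sat_fAll_low by auto.
  apply Hp; intros i Hi; unfold shift_ren; simpl. f_equal; lia.
Qed.

Lemma depends_only_fAll_block_above n' n m (q : formula U) : (n' <= n)%nat ->
  depends_only (fun i => n' <= i)%nat q -> depends_only (fun i => n' <= i)%nat (fAll_block n m q).
Proof.
  intros Hn Hq a b Hab. unfold fAll_block; rewrite !sat_fAll_over.
  split; intros H c; specialize (H c); revert H; apply Hq; intros i Hi; unfold fill_block;
    destruct (Nat.ltb_spec i n); try destruct (Nat.ltb_spec i (n + m));
    rewrite ?Nat.sub_0_r; auto; first [apply Hab | symmetry; apply Hab]; lia.
Qed.

Lemma depends_only_fAll_block n m (q : formula U) :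
  depends_only (fun i => i < n \/ n + m <= i)%nat (fAll_block n m q).
Proof.
  intros a b Hab. rewrite !sat_fAll_block.
  split; intros H a' Ha'; apply H; intros i Hi; rewrite <- (Ha' i Hi);
    first [apply Hab | symmetry; apply Hab]; auto.
Qed.

End Syntax.

Local Open Scope R_scope.

(** * Measures on algebras of formulas *)

Section MeasuresOnAlgebras.
Context {L : signature} {U : structure L}.

Definition formula_algebra (D : formula U -> Prop) : Prop :=
  D (fFalse U) /\ (forall p, D p -> D (fNeg p)) /\ (forall p q, D p -> D q -> D (fAnd p q)).

(** [isKM B n] is [measure_on (LF B n)] by unfolding. *)
Definition measure_on (D : formula U -> Prop) (m : formula U -> R) : Prop :=
  (forall p q, D p -> D q -> fequiv p q -> m p = m q) /\
  (forall p, D p -> 0 <= m p) /\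
  m (fTrue U) = 1 /\
  (forall p q, D p -> D q -> (forall a, ~ (sat a p /\ sat a q)) ->
     m (fOr p q) = m p + m q).

Lemma sat_fOr (a : nat -> U) p q : sat a (fOr p q) <-> sat a p \/ sat a q.
Proof. unfold fOr; simpl; tauto. Qed.

Lemma sat_fTrue (a : nat -> U) : sat a (fTrue U).
Proof. unfold fTrue; simpl; tauto. Qed.

Lemma formula_algebra_LF B n : formula_algebra (LF B n).
Proof. unfold formula_algebra, LF; simpl; tauto. Qed.

Lemma formula_algebra_and D D' : formula_algebra D -> formula_algebra D' ->
  formula_algebra (fun p => D p /\ D' p).
Proof. unfold formula_algebra; intuition auto. Qed.

Lemma formula_algebra_depends_only P : formula_algebra (depends_only P).
Proof.
  unfold formula_algebra, depends_only; simpl; split; [|split].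
  - tauto.
  - intros p Hp a b Hab; now rewrite (Hp a b Hab).
  - intros p q Hp Hq a b Hab; now rewrite (Hp a b Hab), (Hq a b Hab).
Qed.

Definition indicator (p : formula U) (a : nat -> U) : R :=
  if excluded_middle_informative (sat a p) then 1 else 0.

Lemma indicator_sat p a : sat a p -> indicator p a = 1.
Proof. unfold indicator; destruct excluded_middle_informative; tauto. Qed.

Lemma indicator_unsat p a : ~ sat a p -> indicator p a = 0.
Proof. unfold indicator; destruct excluded_middle_informative; tauto. Qed.

Definition sfun_eval (l : list (R * formula U)) (a : nat -> U) : R :=
  fold_right (fun x acc => fst x * indicator (snd x) a + acc) 0 l.

Definition sfun_int (m : formula U -> R) (l : list (R * formula U)) : R :=
  fold_right (fun x acc => fst x * m (snd x) + acc) 0 l.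

Definition sfun_in (D : formula U -> Prop) (l : list (R * formula U)) : Prop :=
  forall x, In x l -> D (snd x).

Definition sfun_scale (r : R) (l : list (R * formula U)) :=
  map (fun x => (r * fst x, snd x)) l.

Lemma sfun_eval_app l l' a : sfun_eval (l ++ l') a = sfun_eval l a + sfun_eval l' a.
Proof. induction l; simpl; [lra|]. rewrite IHl; lra. Qed.

Lemma sfun_int_app m l l' : sfun_int m (l ++ l') = sfun_int m l + sfun_int m l'.
Proof. induction l; simpl; [lra|]. rewrite IHl; lra. Qed.

Lemma sfun_eval_scale r l a : sfun_eval (sfun_scale r l) a = r * sfun_eval l a.
Proof. induction l; simpl; [lra|]. rewrite IHl; lra. Qed.

Lemma sfun_int_scale m r l : sfun_int m (sfun_scale r l) = r * sfun_int m l.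
Proof. induction l; simpl; [lra|]. rewrite IHl; lra. Qed.

Lemma sfun_in_app D l l' : sfun_in D l -> sfun_in D l' -> sfun_in D (l ++ l').
Proof. intros H H' x Hx; apply in_app_or in Hx; destruct Hx; auto. Qed.

Lemma sfun_in_scale D r l : sfun_in D l -> sfun_in D (sfun_scale r l).
Proof.
  intros H x Hx; unfold sfun_scale in Hx; apply in_map_iff in Hx.
  destruct Hx as [y [<- Hy]]; simpl; auto.
Qed.

Lemma sfun_in_cons D x l : sfun_in D (x :: l) -> D (snd x) /\ sfun_in D l.
Proof. intro H; split; [apply H; simpl; auto | intros y Hy; apply H; simpl; auto]. Qed.

Definition sfun_int_on (m : formula U -> R) (l : list (R * formula U)) (e : formula U) : R :=
  fold_right (fun x acc => fst x * m (fAnd (snd x) e) + acc) 0 l.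

Section Algebra.
Context {D : formula U -> Prop} (HD : formula_algebra D).

Lemma alg_false : D (fFalse U). Proof. apply HD. Qed.
Lemma alg_neg p : D p -> D (fNeg p). Proof. apply HD. Qed.
Lemma alg_and p q : D p -> D q -> D (fAnd p q). Proof. apply HD. Qed.
Lemma alg_true : D (fTrue U). Proof. apply alg_neg, alg_false. Qed.
Lemma alg_or p q : D p -> D q -> D (fOr p q).
Proof. intros; apply alg_neg, alg_and; apply alg_neg; auto. Qed.

Context {m : formula U -> R} (Hm : measure_on D m).

Lemma measure_equiv p q : D p -> D q -> fequiv p q -> m p = m q. Proof. apply Hm. Qed.
Lemma measure_ge0 p : D p -> 0 <= m p. Proof. apply Hm. Qed.
Lemma measure_true : m (fTrue U) = 1. Proof. apply Hm. Qed.
Lemma measure_or p q : D p -> D q -> (forall a, ~ (sat a p /\ sat a q)) ->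
  m (fOr p q) = m p + m q.
Proof. apply Hm. Qed.

Hint Resolve alg_false alg_neg alg_and alg_true alg_or : core.

Lemma measure_empty e : D e -> (forall a, ~ sat a e) -> m e = 0.
Proof.
  intros He H.
  assert (Hor := measure_or e e He He (fun a Ha => H a (proj1 Ha))).
  rewrite (measure_equiv (fOr e e) e) in Hor; auto; [lra|].
  intro a; rewrite sat_fOr; tauto.
Qed.

Lemma measure_split e p : D e -> D p -> m e = m (fAnd e p) + m (fAnd e (fNeg p)).
Proof.
  intros He Hp. rewrite <- measure_or; auto.
  - apply measure_equiv; auto. intro a; rewrite sat_fOr; simpl; tauto.
  - intro a; simpl; tauto.
Qed.

Lemma measure_and_full p e : D p -> D e -> m e = 1 -> m p = m (fAnd p e).
Proof.
  intros Hp He H1.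
  assert (Hne : m (fNeg e) = 0).
  { assert (Hs := measure_split (fTrue U) e alg_true He).
    rewrite measure_true, (measure_equiv (fAnd (fTrue U) e) e),
      (measure_equiv (fAnd (fTrue U) (fNeg e)) (fNeg e)) in Hs;
      auto; try (intro a; simpl; unfold fTrue; simpl; tauto). lra. }
  assert (Hs := measure_split (fNeg e) p (alg_neg _ He) Hp).
  rewrite (measure_split p e), (measure_equiv (fAnd p (fNeg e)) (fAnd (fNeg e) p));
    auto; try (intro a; simpl; tauto).
  assert (0 <= m (fAnd (fNeg e) p)) by auto using measure_ge0.
  assert (0 <= m (fAnd (fNeg e) (fNeg p))) by auto using measure_ge0.
  lra.
Qed.


Lemma sfun_int_on_split l e p : D e -> D p -> sfun_in D l ->
  sfun_int_on m l e = sfun_int_on m l (fAnd e p) + sfun_int_on m l (fAnd e (fNeg p)).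
Proof.
  intros He Hp; induction l as [|[c q] l IH]; intro Hl; simpl; [lra|].
  apply sfun_in_cons in Hl as [Hq Hl]; simpl in Hq.
  rewrite IH, (measure_split (fAnd q e) p) by auto.
  rewrite (measure_equiv (fAnd (fAnd q e) p) (fAnd q (fAnd e p))),
    (measure_equiv (fAnd (fAnd q e) (fNeg p)) (fAnd q (fAnd e (fNeg p))));
    auto; try (intro a; simpl; tauto). lra.
Qed.

Lemma sfun_int_on_true l : sfun_in D l -> sfun_int_on m l (fTrue U) = sfun_int m l.
Proof.
  induction l as [|[c p] l IH]; intro Hl; simpl; auto.
  apply sfun_in_cons in Hl as [Hp Hl]; simpl in Hp.
  rewrite IH by auto. do 2 f_equal. apply measure_equiv; auto.
  intro a; simpl; unfold fTrue; simpl; tauto.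
Qed.

Lemma sfun_int_ge_on l : forall e s, D e -> sfun_in D l ->
  (forall a, sat a e -> s <= sfun_eval l a) -> s * m e <= sfun_int_on m l e.
Proof.
  induction l as [|[c p] l IH]; intros e s He Hl H.
  - simpl in *. destruct (classic (exists a, sat a e)) as [[a Ha]|Hn].
    + specialize (H a Ha). assert (0 <= m e) by (apply measure_ge0; auto). nra.
    + rewrite measure_empty; eauto. lra.
  - apply sfun_in_cons in Hl as [Hp Hl]; simpl in Hp.
    assert (IH1 : (s - c) * m (fAnd e p) <= sfun_int_on m l (fAnd e p)).
    { apply IH; auto. intros a [Ha Hpa]. specialize (H a Ha); simpl in H.
      rewrite indicator_sat in H; auto. lra. }
    assert (IH2 : s * m (fAnd e (fNeg p)) <= sfun_int_on m l (fAnd e (fNeg p))).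
    { apply IH; auto. intros a [Ha Hpa]. specialize (H a Ha); simpl in H.
      rewrite indicator_unsat in H; auto. lra. }
    simpl. rewrite (sfun_int_on_split l e p), (measure_split e p),
      (measure_equiv (fAnd p e) (fAnd e p)); auto; try (intro a; simpl; tauto). nra.
Qed.

Lemma sfun_int_ge l s : sfun_in D l -> (forall a, s <= sfun_eval l a) -> s <= sfun_int m l.
Proof.
  intros Hl H.
  assert (Hs := sfun_int_ge_on l (fTrue U) s alg_true Hl (fun a _ => H a)).
  rewrite measure_true, sfun_int_on_true in Hs by auto. lra.
Qed.

End Algebra.

Lemma measure_on_sub D D' m : measure_on D m -> (forall p, D' p -> D p) -> measure_on D' m.
Proof. intros [H1 [H2 [H3 H4]]] HD; repeat split; auto. Qed.

Lemma measure_on_comap D D' m (T : formula U -> formula U) (s : (nat -> U) -> nat -> U) :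
  formula_algebra D -> formula_algebra D' -> measure_on D m ->
  (forall p, D' p -> D (T p)) ->
  (forall p, D' p -> forall a, sat a (T p) <-> sat (s a) p) ->
  measure_on D' (fun p => m (T p)).
Proof.
  intros HD HD' Hm HT Hs. repeat split.
  - intros p q Hp Hq Heq. apply (measure_equiv Hm); auto.
    intro a; rewrite !Hs by auto; apply Heq.
  - intros p Hp. apply (measure_ge0 Hm); auto.
  - assert (HT1 := alg_true HD').
    rewrite <- (measure_true Hm). apply (measure_equiv Hm); auto.
    + apply (alg_true HD).
    + intro a; rewrite Hs by auto; split; intros; apply sat_fTrue.
  - intros p q Hp Hq Hd. assert (Hpq := alg_or HD' p q Hp Hq).
    rewrite (measure_equiv Hm (T (fOr p q)) (fOr (T p) (T q))); auto.
    + apply (measure_or Hm); auto. intro a; rewrite !Hs by auto; apply Hd.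
    + apply (alg_or HD); auto.
    + intro a. rewrite Hs, !sat_fOr, !Hs by auto. tauto.
Qed.


End MeasuresOnAlgebras.

(** * The Hahn-Banach theorem *)

Lemma zorn_preorder (T : Type) (t0 : T) (le : T -> T -> Prop) :
  (forall t, le t t) -> (forall r s t, le r s -> le s t -> le r t) ->
  (forall A : T -> Prop, (forall s t, A s -> A t -> le s t \/ le t s) ->
     exists t, forall s, A s -> le s t) ->
  exists t, forall s, le t s -> le s t.
Proof.
  intros Hrefl Htrans Hchain.
  destruct (@classical_sets.ZL_preorder T t0 (fun x y => boolp.asbool (le x y)))
    as [t Ht].
  - intro t; now apply boolp.asboolT.
  - intros r s t H1 H2; apply boolp.asboolT.
    exact (Htrans _ _ _ (boolp.asboolW H1) (boolp.asboolW H2)).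
  - intros A HA. destruct (Hchain A) as [t Hub].
    + intros s t Hs Ht; destruct (HA s t Hs Ht); [left|right]; now apply boolp.asboolW.
    + exists t; intros s Hs; now apply boolp.asboolT, Hub.
  - exists t; intros s Hs. apply boolp.asboolW, Ht, boolp.asboolT, Hs.
Qed.

Section HahnBanach.
Local Set Implicit Arguments.
Local Unset Strict Implicit.
Variable X : Type.

(** [ub g t] says that [t] is a certified upper bound for [g]; it plays the
    role of the sublinear functional [g |-> inf {t | ub g t}]. *)
Variable ub : (X -> R) -> R -> Prop.

Definition bounded_fun (g : X -> R) : Prop := exists M, forall x, Rabs (g x) <= M.

Hypothesis ub_add : forall g t g' t', ub g t -> ub g' t' -> ub (fun x => g x + g' x) (t + t').
Hypothesis ub_scale : forall g t r, ub g t -> 0 < r -> ub (fun x => r * g x) (r * t).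
Hypothesis ub_bounded : forall g, bounded_fun g -> exists t, ub g t.
Hypothesis ub_zero : forall t, ub (fun _ => 0) t -> 0 <= t.

Definition dominated_linear (W : (X -> R) -> Prop) (F : (X -> R) -> R) : Prop :=
  (forall g, W g -> bounded_fun g) /\ W (fun _ => 0) /\
  (forall g h, W g -> W h -> W (fun x => g x + h x)) /\
  (forall r g, W g -> W (fun x => r * g x)) /\
  (forall g h, W g -> W h -> F (fun x => g x + h x) = F g + F h) /\
  (forall r g, W g -> F (fun x => r * g x) = r * F g) /\
  (forall g t, W g -> ub g t -> F g <= t).

Record partial_functional := {
  pf_dom : (X -> R) -> Prop;
  pf_fun : (X -> R) -> R;
  pf_ok : dominated_linear pf_dom pf_fun }.

Definition pf_le (s t : partial_functional) : Prop :=
  (forall g, pf_dom s g -> pf_dom t g) /\ (forall g, pf_dom s g -> pf_fun t g = pf_fun s g).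

Lemma bounded_fun_zero : bounded_fun (fun _ => 0).
Proof. exists 0; intro; rewrite Rabs_R0; lra. Qed.

Lemma dominated_linear_zero : dominated_linear (fun g => g = (fun _ => 0)) (fun _ => 0).
Proof.
  repeat split; intros; subst; auto using bounded_fun_zero; try lra.
  all: try (apply functional_extensionality; intro; lra).
Qed.

Definition pf_zero : partial_functional := Build_partial_functional dominated_linear_zero.

Section Chain.
Variable A : partial_functional -> Prop.
Hypothesis A_chain : forall s t, A s -> A t -> pf_le s t \/ pf_le t s.
Variable s0 : partial_functional.
Hypothesis A_s0 : A s0.

Definition chain_dom (g : X -> R) : Prop := exists s, A s /\ pf_dom s g.

Definition chain_fun (g : X -> R) : R :=
  match excluded_middle_informative (chain_dom g) with
  | left H => pf_fun (proj1_sig (constructive_indefinite_description _ H)) g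
  | right _ => 0
  end.

Lemma chain_fun_eq s g : A s -> pf_dom s g -> chain_fun g = pf_fun s g.
Proof.
  intros Hs Hg. unfold chain_fun. destruct excluded_middle_informative as [H|H].
  - destruct (constructive_indefinite_description _ H) as [s' [Hs' Hg']]; simpl.
    destruct (A_chain Hs Hs') as [[_ E]|[_ E]]; rewrite E; auto.
  - exfalso; apply H; exists s; auto.
Qed.

Lemma chain_dom_common g h : chain_dom g -> chain_dom h -> exists u, A u /\ pf_dom u g /\ pf_dom u h.
Proof.
  intros [s [Hs Hg]] [s' [Hs' Hh]].
  destruct (A_chain Hs Hs') as [[E _]|[E _]]; [exists s' | exists s]; auto.
Qed.

Lemma dominated_linear_chain : dominated_linear chain_dom chain_fun.
Proof.
  repeat split.
  - intros g [s [Hs Hg]]. apply (pf_ok s); auto.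
  - exists s0; split; auto. apply (pf_ok s0).
  - intros g h Hg Hh. destruct (chain_dom_common Hg Hh) as [u [Hu [H1 H2]]].
    exists u; split; auto. apply (pf_ok u); auto.
  - intros r g [s [Hs Hg]]. exists s; split; auto. apply (pf_ok s); auto.
  - intros g h Hg Hh. destruct (chain_dom_common Hg Hh) as [u [Hu [H1 H2]]].
    assert (H3 : pf_dom u (fun x => g x + h x)) by (apply (pf_ok u); auto).
    rewrite (chain_fun_eq Hu H1), (chain_fun_eq Hu H2), (chain_fun_eq Hu H3).
    apply (pf_ok u); auto.
  - intros r g [s [Hs Hg]].
    assert (H3 : pf_dom s (fun x => r * g x)) by (apply (pf_ok s); auto).
    rewrite (chain_fun_eq Hs Hg), (chain_fun_eq Hs H3). apply (pf_ok s); auto.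
  - intros g t [s [Hs Hg]] Hub. rewrite (chain_fun_eq Hs Hg). apply (pf_ok s); auto.
Qed.

Lemma chain_has_ub : exists t, forall s, A s -> pf_le s t.
Proof.
  exists (Build_partial_functional dominated_linear_chain). intros s Hs; split; simpl.
  - intros g Hg; exists s; auto.
  - intros g Hg; now apply chain_fun_eq.
Qed.

End Chain.

Section OneStep.
Variable t : partial_functional.
Variable v : X -> R.
Hypothesis v_bounded : bounded_fun v.
Hypothesis v_new : ~ pf_dom t v.

Let W := pf_dom t.
Let F := pf_fun t.

Lemma W_zero : W (fun _ => 0). Proof. apply (pf_ok t). Qed.
Lemma W_add g h : W g -> W h -> W (fun x => g x + h x). Proof. apply (pf_ok t). Qed.
Lemma W_scale r g : W g -> W (fun x => r * g x). Proof. apply (pf_ok t). Qed.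
Lemma W_bounded g : W g -> bounded_fun g. Proof. apply (pf_ok t). Qed.
Lemma F_add g h : W g -> W h -> F (fun x => g x + h x) = F g + F h. Proof. apply (pf_ok t). Qed.
Lemma F_scale r g : W g -> F (fun x => r * g x) = r * F g. Proof. apply (pf_ok t). Qed.
Lemma F_ub g s : W g -> ub g s -> F g <= s. Proof. apply (pf_ok t). Qed.

(** The admissible values of the extension at [v] lie between the lower
    bounds [F w - s] (for [ub (w - v) s]) and the upper bounds [s - F w]
    (for [ub (w + v) s]). *)
Definition lower_value (y : R) : Prop :=
  exists w s, W w /\ ub (fun x => w x - v x) s /\ y = F w - s.
Definition upper_value (y : R) : Prop :=
  exists w s, W w /\ ub (fun x => w x + v x) s /\ y = s - F w.

Lemma bounded_fun_add_v w r : bounded_fun w -> bounded_fun (fun x => w x + r * v x).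
Proof.
  intros [M1 H1]. destruct v_bounded as [M2 H2]. exists (M1 + Rabs r * M2). intro x.
  eapply Rle_trans; [apply Rabs_triang|]. rewrite Rabs_mult.
  apply Rplus_le_compat; auto. apply Rmult_le_compat_l; auto using Rabs_pos.
Qed.

Lemma lower_le_upper a b : lower_value a -> upper_value b -> a <= b.
Proof.
  intros [w' [s' [Hw' [Hub' ->]]]] [w [s [Hw [Hub ->]]]].
  assert (H := ub_add Hub' Hub). cbv beta in H.
  replace (fun x => w' x - v x + (w x + v x)) with (fun x => w' x + w x) in H
    by (apply functional_extensionality; intro; ring).
  assert (Hle := F_ub (W_add Hw' Hw) H). rewrite F_add in Hle; auto. lra.
Qed.

Lemma value_between :
  {c | (forall a, lower_value a -> a <= c) /\ (forall b, upper_value b -> c <= b)}.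
Proof.
  assert (Hv : forall r, exists s, ub (fun x => 0 + r * v x) s)
    by (intro r; apply ub_bounded, bounded_fun_add_v, bounded_fun_zero).
  destruct (completeness lower_value) as [c [Hub Hlub]].
  - destruct (Hv 1) as [s Hs]. exists (s - F (fun _ => 0)). intros a Ha. apply lower_le_upper; auto.
    exists (fun _ => 0), s; repeat split; auto using W_zero.
    replace (fun x => 0 + v x) with (fun x => 0 + 1 * v x); auto.
    apply functional_extensionality; intro; ring.
  - destruct (Hv (-1)) as [s Hs]. exists (F (fun _ => 0) - s), (fun _ => 0), s.
    repeat split; auto using W_zero.
    replace (fun x => 0 - v x) with (fun x => 0 + -1 * v x); auto.
    apply functional_extensionality; intro; ring.
  - exists c; split; auto. intros b Hb. apply Hlub. intros a Ha. now apply lower_le_upper.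
Qed.

Let c := proj1_sig value_between.

Definition ext_dom (g : X -> R) : Prop := exists w r, W w /\ g = (fun x => w x + r * v x).

Definition ext_fun (g : X -> R) : R :=
  match excluded_middle_informative
          (exists p : (X -> R) * R, W (fst p) /\ g = (fun x => fst p x + snd p * v x)) with
  | left H => let p := proj1_sig (constructive_indefinite_description _ H) in F (fst p) + snd p * c
  | right _ => 0
  end.

Lemma ext_decomposition_unique w1 r1 w2 r2 : W w1 -> W w2 ->
  (fun x => w1 x + r1 * v x) = (fun x => w2 x + r2 * v x) -> r1 = r2 /\ w1 = w2.
Proof.
  intros H1 H2 E.
  assert (Ex : forall x, w1 x + r1 * v x = w2 x + r2 * v x)
    by (intro x; exact (f_equal (fun f => f x) E)).
  destruct (Req_dec r1 r2) as [<-|Hne].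
  - split; auto. apply functional_extensionality; intro x; specialize (Ex x); lra.
  - exfalso. apply v_new.
    replace v with (fun x => / (r2 - r1) * (w1 x + (-1) * w2 x)).
    + apply W_scale, W_add, W_scale; auto.
    + apply functional_extensionality; intro x. specialize (Ex x).
      replace (w1 x + -1 * w2 x) with ((r2 - r1) * v x) by lra. field; lra.
Qed.

Lemma ext_fun_eq w r : W w -> ext_fun (fun x => w x + r * v x) = F w + r * c.
Proof.
  intro Hw. unfold ext_fun. destruct excluded_middle_informative as [H|H].
  - destruct (constructive_indefinite_description _ H) as [[w2 r2] [Hw2 E]]; simpl in *.
    now destruct (ext_decomposition_unique Hw Hw2 E) as [-> ->].
  - exfalso; apply H. now exists (w, r).
Qed.

Lemma ext_fun_ub w r s : W w -> ub (fun x => w x + r * v x) s -> F w + r * c <= s.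
Proof.
  intros Hw Hub.
  destruct (Rtotal_order r 0) as [Hr|[->|Hr]].
  - assert (H := ub_scale Hub (Ropp_0_gt_lt_contravar _ (Rinv_lt_0_compat _ Hr))).
    cbv beta in H.
    replace (fun x => - / r * (w x + r * v x)) with (fun x => - / r * w x - v x) in H
      by (apply functional_extensionality; intro; field; lra).
    assert (Hl : - / r * F w - - / r * s <= c).
    { apply (proj2_sig value_between). exists (fun x => - / r * w x), (- / r * s).
      repeat split; auto using W_scale. now rewrite F_scale. }
    assert (Hm : (- r) * (- / r * F w - - / r * s) <= (- r) * c)
      by (apply Rmult_le_compat_l; lra).
    replace ((- r) * (- / r * F w - - / r * s)) with (F w - s) in Hm by (field; lra). lra.
  - replace (fun x => w x + 0 * v x) with w in Hub
      by (apply functional_extensionality; intro; ring).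
    assert (H := F_ub Hw Hub). lra.
  - assert (H := ub_scale Hub (Rinv_0_lt_compat _ Hr)). cbv beta in H.
    replace (fun x => / r * (w x + r * v x)) with (fun x => / r * w x + v x) in H
      by (apply functional_extensionality; intro; field; lra).
    assert (Hu : c <= / r * s - / r * F w).
    { apply (proj2_sig value_between). exists (fun x => / r * w x), (/ r * s).
      repeat split; auto using W_scale. now rewrite F_scale. }
    assert (Hm : r * c <= r * (/ r * s - / r * F w)) by (apply Rmult_le_compat_l; lra).
    replace (r * (/ r * s - / r * F w)) with (s - F w) in Hm by (field; lra). lra.
Qed.

Lemma dominated_linear_ext : dominated_linear ext_dom ext_fun.
Proof.
  repeat split.
  - intros g [w [r [Hw ->]]]. apply bounded_fun_add_v, W_bounded, Hw.
  - exists (fun _ => 0), 0. split; auto using W_zero.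
    apply functional_extensionality; intro; ring.
  - intros g h [w1 [r1 [H1 ->]]] [w2 [r2 [H2 ->]]].
    exists (fun x => w1 x + w2 x), (r1 + r2). split; auto using W_add.
    apply functional_extensionality; intro; ring.
  - intros r g [w1 [r1 [H1 ->]]]. exists (fun x => r * w1 x), (r * r1).
    split; auto using W_scale. apply functional_extensionality; intro; ring.
  - intros g h [w1 [r1 [H1 ->]]] [w2 [r2 [H2 ->]]].
    replace (fun x => w1 x + r1 * v x + (w2 x + r2 * v x))
      with (fun x => (fun y => w1 y + w2 y) x + (r1 + r2) * v x)
      by (apply functional_extensionality; intro; ring).
    rewrite !ext_fun_eq, F_add; auto using W_add. ring.
  - intros r g [w1 [r1 [H1 ->]]].
    replace (fun x => r * (w1 x + r1 * v x))
      with (fun x => (fun y => r * w1 y) x + (r * r1) * v x)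
      by (apply functional_extensionality; intro; ring).
    rewrite !ext_fun_eq, F_scale; auto using W_scale. ring.
  - intros g s [w [r [Hw ->]]] Hub. rewrite ext_fun_eq; auto. now apply ext_fun_ub.
Qed.

Lemma not_maximal : ~ (forall s, pf_le t s -> pf_le s t).
Proof.
  intro Hmax. set (t' := Build_partial_functional dominated_linear_ext).
  assert (Htt' : pf_le t t').
  { split; simpl.
    - intros g Hg. exists g, 0. split; auto. apply functional_extensionality; intro; ring.
    - intros g Hg.
      replace g with (fun x => g x + 0 * v x) at 1
        by (apply functional_extensionality; intro; ring).
      rewrite ext_fun_eq; auto. unfold F; ring. }
  apply v_new, (proj1 (Hmax t' Htt')). simpl.
  exists (fun _ => 0), 1. split; auto using W_zero.
  apply functional_extensionality; intro; ring.
Qed.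

End OneStep.

Theorem hahn_banach : exists F : (X -> R) -> R,
  (forall g h, bounded_fun g -> bounded_fun h -> F (fun x => g x + h x) = F g + F h) /\
  (forall r g, bounded_fun g -> F (fun x => r * g x) = r * F g) /\
  (forall g t, bounded_fun g -> ub g t -> F g <= t).
Proof.
  destruct (@zorn_preorder _ pf_zero pf_le) as [t Ht].
  - intro; split; auto.
  - intros r s u [H1 H2] [H3 H4]; split; auto. intros g Hg. rewrite H4; auto.
  - intros A HA. destruct (classic (exists s, A s)) as [[s0 Hs0]|Hn].
    + eapply chain_has_ub; eauto.
    + exists pf_zero. intros s Hs; exfalso; eauto.
  - assert (Hall : forall g, bounded_fun g -> pf_dom t g).
    { intros g Hg. apply NNPP; intro Hn. exact (not_maximal Hg Hn Ht). }
    exists (pf_fun t). destruct (pf_ok t) as [_ [_ [_ [_ [H1 [H2 H3]]]]]].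
    repeat split; auto.
Qed.

End HahnBanach.

(** * Amalgamation of measures *)

Lemma ex_min_listed (V : list R) (P : R -> Prop) : (exists x, P x) -> (forall x, P x -> In x V) ->
  exists x, P x /\ forall y, P y -> x <= y.
Proof.
  intros [x0 Hx0] HV.
  enough (H : forall V, (exists x, P x /\ In x V) ->
            exists x, P x /\ forall y, P y -> In y V -> x <= y).
  { destruct (H V) as [x [Hx Hmin]]; eauto. }
  clear x0 Hx0 HV V. intro V.
  induction V as [|v V IH]; intros [x [Hx Hin]]; [destruct Hin|].
  destruct (classic (exists x, P x /\ In x V)) as [HV|HV].
  - destruct (IH HV) as [m [Hm Hmin]].
    destruct (classic (P v /\ v < m)) as [[Hv Hlt]|Hn].
    + exists v; split; auto. intros y Hy [<-|Hy']; [lra|]. specialize (Hmin y Hy Hy'); lra.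
    + exists m; split; auto. intros y Hy [Hyv|Hy']; auto. subst y.
      destruct (Rle_dec m v); auto. exfalso; apply Hn; split; auto; lra.
  - assert (Hv : x = v) by (destruct Hin; auto; exfalso; eauto). subst x.
    exists v; split; auto. intros y Hy [<-|Hy']; [lra|]. exfalso; eauto.
Qed.

Section Amalgamation.
Context {L : signature} {U : structure L}.

Fixpoint fconj (l : list (formula U)) : formula U :=
  match l with nil => fTrue U | p :: l => fAnd p (fconj l) end.

Lemma sat_fconj l (a : nat -> U) : sat a (fconj l) <-> forall p, In p l -> sat a p.
Proof.
  induction l as [|p l IH]; simpl.
  - tauto.
  - rewrite IH. split; [intros [Hp Hl] q [<-|Hq]; auto | intro H; split; auto].
Qed.

Lemma alg_fconj D l : formula_algebra D -> (forall p, In p l -> D p) -> D (fconj l).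
Proof.
  intros HD; induction l as [|p l IH]; intro Hl; simpl.
  - apply (alg_true HD).
  - apply (alg_and HD); [apply Hl; simpl; auto | apply IH; intros; apply Hl; simpl; auto].
Qed.

Fixpoint fsfun_ge (l : list (R * formula U)) (v : R) : formula U :=
  match l with
  | nil => if Rle_dec v 0 then fTrue U else fFalse U
  | (c, p) :: l => fOr (fAnd p (fsfun_ge l (v - c))) (fAnd (fNeg p) (fsfun_ge l v))
  end.

Lemma sat_fsfun_ge l : forall v a, sat a (fsfun_ge l v) <-> v <= sfun_eval l a.
Proof.
  induction l as [|[c p] l IH]; intros v a.
  - simpl; destruct (Rle_dec v 0); simpl; [tauto | split; [tauto|lra]].
  - change (sat a (fOr (fAnd p (fsfun_ge l (v - c))) (fAnd (fNeg p) (fsfun_ge l v)))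
      <-> v <= c * indicator p a + sfun_eval l a).
    rewrite sat_fOr; simpl; rewrite !IH.
    destruct (classic (sat a p)) as [H|H];
      [rewrite indicator_sat | rewrite indicator_unsat]; auto; split; intuition lra.
Qed.

Lemma alg_fsfun_ge D l v : formula_algebra D -> sfun_in D l -> D (fsfun_ge l v).
Proof.
  intro HD; revert v; induction l as [|[c p] l IH]; intros v Hl; simpl.
  - destruct (Rle_dec v 0); [apply (alg_true HD) | apply (alg_false HD)].
  - apply sfun_in_cons in Hl as [Hp Hl]; simpl in Hp.
    apply (alg_or HD); apply (alg_and HD); auto; apply (alg_neg HD); auto.
Qed.

Fixpoint sfun_values (l : list (R * formula U)) : list R :=
  match l with
  | nil => 0 :: nil
  | (c, p) :: l => sfun_values l ++ map (Rplus c) (sfun_values l)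
  end.

Lemma sfun_eval_in_values l a : In (sfun_eval l a) (sfun_values l).
Proof.
  induction l as [|[c p] l IH]; simpl; auto.
  apply in_or_app. unfold indicator. destruct excluded_middle_informative.
  - right. replace (c * 1 + sfun_eval l a) with (c + sfun_eval l a) by ring. now apply in_map.
  - left. now replace (c * 0 + sfun_eval l a) with (sfun_eval l a) by ring.
Qed.

Lemma sfun_eval_map_unsat (E : R -> formula U) V a : (forall v, In v V -> ~ sat a (E v)) ->
  sfun_eval (map (fun v => (v, E v)) V) a = 0.
Proof.
  induction V as [|v V IH]; intro H; simpl; auto.
  rewrite indicator_unsat, IH.
  - lra.
  - intros u Hu; apply H; simpl; auto.
  - apply H; simpl; auto.
Qed.

Lemma sfun_eval_partition (E : R -> formula U) V a x : NoDup V -> In x V ->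
  (forall v, In v V -> (sat a (E v) <-> v = x)) ->
  sfun_eval (map (fun v => (v, E v)) V) a = x.
Proof.
  induction V as [|v V IH]; intros Hnd Hx HE; [destruct Hx|]. simpl.
  inversion Hnd as [|? ? Hv Hnd']; subst.
  destruct (Req_dec v x) as [->|Hne].
  - rewrite indicator_sat, sfun_eval_map_unsat.
    + lra.
    + intros u Hu. rewrite HE by (simpl; auto). intros ->; contradiction.
    + apply HE; simpl; auto.
  - rewrite indicator_unsat, IH; auto.
    + lra.
    + destruct Hx; [contradiction|auto].
    + intros u Hu; apply HE; simpl; auto.
    + rewrite HE by (simpl; auto). auto.
Qed.

Variables (D1 D2 : formula U -> Prop) (m1 m2 : formula U -> R) (P : nat -> Prop).
Hypothesis HD1 : formula_algebra D1.
Hypothesis HD2 : formula_algebra D2.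
Hypothesis Hm1 : measure_on D1 m1.
Hypothesis Hm2 : measure_on D2 m2.
Hypothesis D1_local : forall p, D1 p -> depends_only P p.
Variable proj : formula U -> formula U.
Hypothesis proj_spec : forall q, D2 q ->
  D1 (proj q) /\ D2 (proj q) /\
  forall a, sat a (proj q) <-> forall a', agree_on P a a' -> sat a' q.
Hypothesis m_agree : forall p, D1 p -> D2 p -> m1 p = m2 p.

Lemma sfun_eval_agree l a a' : sfun_in D1 l -> agree_on P a a' ->
  sfun_eval l a = sfun_eval l a'.
Proof.
  intros Hl Ha; induction l as [|[c p] l IH]; simpl; auto.
  apply sfun_in_cons in Hl as [Hp Hl]; simpl in Hp.
  rewrite IH by auto. unfold indicator.
  destruct excluded_middle_informative as [H|H], excluded_middle_informative as [H'|H'];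
    auto; exfalso; [apply H' | apply H]; now apply (D1_local p Hp a a' Ha).
Qed.

Lemma sfun_int_agree l : sfun_in (fun p => D1 p /\ D2 p) l -> sfun_int m1 l = sfun_int m2 l.
Proof.
  induction l as [|[c p] l IH]; intro Hl; simpl; auto.
  apply sfun_in_cons in Hl as [[Hp1 Hp2] Hl]; simpl in *.
  rewrite IH, m_agree; auto.
Qed.

Definition fclass_ge (l : list (R * formula U)) (w : R) : formula U := proj (fsfun_ge l w).

Lemma fclass_ge_spec l w : sfun_in D2 l ->
  D1 (fclass_ge l w) /\ D2 (fclass_ge l w) /\
  forall a, sat a (fclass_ge l w) <-> forall a', agree_on P a a' -> w <= sfun_eval l a'.
Proof.
  intro Hl. destruct (proj_spec _ (alg_fsfun_ge D2 l w HD2 Hl)) as [H1 [H2 H3]].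
  split; [|split]; auto. intro a; unfold fclass_ge; rewrite H3.
  split; intros Ha a' Hr; specialize (Ha a' Hr); now apply sat_fsfun_ge.
Qed.

Definition fclass_min (l : list (R * formula U)) (V : list R) (v : R) : formula U :=
  fAnd (fclass_ge l v)
    (fconj (map (fun w => fNeg (fclass_ge l w))
                (filter (fun w => if Rlt_dec v w then true else false) V))).

Lemma fclass_min_in l V v : sfun_in D2 l -> D1 (fclass_min l V v) /\ D2 (fclass_min l V v).
Proof.
  intro Hl.
  assert (H : forall D, formula_algebra D -> (forall w, D (fclass_ge l w)) ->
                D (fclass_min l V v)).
  { intros D HD HF. apply (alg_and HD); auto. apply (alg_fconj D); auto.
    intros q Hq; apply in_map_iff in Hq as [w [<- _]]. apply (alg_neg HD), HF. }
  split; apply H; auto; intro w; apply (fclass_ge_spec l w Hl).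
Qed.

Lemma sat_fclass_min l V v a : sfun_in D2 l ->
  sat a (fclass_min l V v) <->
  (forall a', agree_on P a a' -> v <= sfun_eval l a') /\
  (forall w, In w V -> v < w -> ~ forall a', agree_on P a a' -> w <= sfun_eval l a').
Proof.
  intro Hl. unfold fclass_min; simpl.
  rewrite sat_fconj, (proj2 (proj2 (fclass_ge_spec l v Hl))). apply and_iff_compat_l. split.
  - intros H w Hw Hlt. rewrite <- (proj2 (proj2 (fclass_ge_spec l w Hl))).
    apply (H (fNeg (fclass_ge l w))), (in_map (fun w => fNeg (fclass_ge l w))), filter_In.
    split; auto.
    now destruct Rlt_dec.
  - intros H q Hq. apply in_map_iff in Hq as [w [<- Hw]]. apply filter_In in Hw as [Hw Hlt].
    destruct Rlt_dec; [|discriminate]. simpl.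
    rewrite (proj2 (proj2 (fclass_ge_spec l w Hl))). auto.
Qed.

Lemma sfun_class_min l : sfun_in D2 l ->
  exists lk, sfun_in (fun p => D1 p /\ D2 p) lk /\
    forall a, (exists a', agree_on P a a' /\ sfun_eval lk a = sfun_eval l a') /\
              (forall a', agree_on P a a' -> sfun_eval lk a <= sfun_eval l a').
Proof.
  intro Hl. set (V := nodup Req_EM_T (sfun_values l)).
  assert (HV : forall a, In (sfun_eval l a) V) by (intro; apply nodup_In, sfun_eval_in_values).
  exists (map (fun v => (v, fclass_min l V v)) V). split.
  { intros x Hx. apply in_map_iff in Hx as [v [<- _]]. now apply fclass_min_in. }
  intro a.
  destruct (ex_min_listed V (fun v => exists a', agree_on P a a' /\ sfun_eval l a' = v))
    as [vs [[a' [Ha' <-]] Hmin]].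
  { exists (sfun_eval l a), a; split; auto. intros i _; auto. }
  { intros x [a' [_ <-]]; apply HV. }
  assert (Hle : forall a'', agree_on P a a'' -> sfun_eval l a' <= sfun_eval l a'')
    by (intros a'' Hr; apply Hmin; eauto).
  rewrite sfun_eval_partition with (x := sfun_eval l a');
    [split; eauto | apply NoDup_nodup | auto|].
  intros v Hv. rewrite sat_fclass_min by auto. split.
  - intros [H1 H2]. specialize (H1 a' Ha').
    destruct (Rle_lt_or_eq_dec _ _ H1) as [Hlt|]; auto. exfalso; exact (H2 _ (HV a') Hlt Hle).
  - intros ->. split; auto. intros w _ Hlt Hc. specialize (Hc a' Ha'). lra.
Qed.

Lemma sfun_int_ge_mixed l1 l2 s : sfun_in D1 l1 -> sfun_in D2 l2 ->
  (forall a, s <= sfun_eval l1 a + sfun_eval l2 a) -> s <= sfun_int m1 l1 + sfun_int m2 l2.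
Proof.
  intros Hl1 Hl2 H.
  destruct (sfun_class_min l2 Hl2) as [lk [Hlk Hmin]].
  assert (Hlk1 : sfun_in D1 lk) by (intros x Hx; apply Hlk, Hx).
  assert (Hlk2 : sfun_in D2 lk) by (intros x Hx; apply Hlk, Hx).
  assert (C1 : s <= sfun_int m1 (l1 ++ lk)).
  { apply (sfun_int_ge HD1 Hm1); auto using sfun_in_app.
    intro a. rewrite sfun_eval_app. destruct (Hmin a) as [[a' [Ha' ->]] _].
    rewrite (sfun_eval_agree l1 a a' Hl1 Ha'). apply H. }
  assert (C2 : 0 <= sfun_int m2 (l2 ++ sfun_scale (-1) lk)).
  { apply (sfun_int_ge HD2 Hm2); auto using sfun_in_app, sfun_in_scale.
    intro a. rewrite sfun_eval_app, sfun_eval_scale.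
    destruct (Hmin a) as [_ Hle]. specialize (Hle a (fun i _ => eq_refl)). lra. }
  rewrite sfun_int_app in C1, C2. rewrite sfun_int_scale in C2.
  rewrite (sfun_int_agree lk Hlk) in C1. lra.
Qed.

Definition sfun_ub (g : (nat -> U) -> R) (t : R) : Prop :=
  exists l1 l2 c, sfun_in D1 l1 /\ sfun_in D2 l2 /\
    (forall a, g a <= sfun_eval l1 a + sfun_eval l2 a + c) /\
    sfun_int m1 l1 + sfun_int m2 l2 + c <= t.

Lemma sfun_ub_add g t g' t' : sfun_ub g t -> sfun_ub g' t' ->
  sfun_ub (fun a => g a + g' a) (t + t').
Proof.
  intros [l1 [l2 [c [H1 [H2 [H3 H4]]]]]] [l1' [l2' [c' [H1' [H2' [H3' H4']]]]]].
  exists (l1 ++ l1'), (l2 ++ l2'), (c + c'). repeat split; auto using sfun_in_app.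
  - intro a. rewrite !sfun_eval_app. specialize (H3 a); specialize (H3' a); lra.
  - rewrite !sfun_int_app. lra.
Qed.

Lemma sfun_ub_scale g t r : sfun_ub g t -> 0 < r -> sfun_ub (fun a => r * g a) (r * t).
Proof.
  intros [l1 [l2 [c [H1 [H2 [H3 H4]]]]]] Hr.
  exists (sfun_scale r l1), (sfun_scale r l2), (r * c). repeat split; auto using sfun_in_scale.
  - intro a. rewrite !sfun_eval_scale. specialize (H3 a).
    replace (r * sfun_eval l1 a + r * sfun_eval l2 a + r * c)
      with (r * (sfun_eval l1 a + sfun_eval l2 a + c)) by ring.
    apply Rmult_le_compat_l; lra.
  - rewrite !sfun_int_scale.
    replace (r * sfun_int m1 l1 + r * sfun_int m2 l2 + r * c)
      with (r * (sfun_int m1 l1 + sfun_int m2 l2 + c)) by ring.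
    apply Rmult_le_compat_l; lra.
Qed.

Lemma sfun_ub_const g c : (forall a, g a <= c) -> sfun_ub g c.
Proof.
  intro H. exists nil, nil, c.
  split; [intros ? []|split; [intros ? []|split]]; simpl; [intro a; specialize (H a)|]; lra.
Qed.

Lemma sfun_ub_bounded g : bounded_fun g -> exists t, sfun_ub g t.
Proof.
  intros [M HM]. exists M. apply sfun_ub_const. intro a.
  specialize (HM a). assert (g a <= Rabs (g a)) by apply RRle_abs. lra.
Qed.

Lemma sfun_ub_zero t : sfun_ub (fun _ => 0) t -> 0 <= t.
Proof.
  intros [l1 [l2 [c [H1 [H2 [H3 H4]]]]]].
  assert (- c <= sfun_int m1 l1 + sfun_int m2 l2).
  { apply sfun_int_ge_mixed; auto. intro a; specialize (H3 a); lra. }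
  lra.
Qed.

Lemma sfun_ub_D1 p g r : D1 p -> (forall a, g a <= r * indicator p a) -> sfun_ub g (r * m1 p).
Proof.
  intros Hp H. exists ((r, p) :: nil), nil, 0. repeat split; simpl.
  - intros x [<-|[]]; auto.
  - intros ? [].
  - intro a; specialize (H a); lra.
  - lra.
Qed.

Lemma sfun_ub_D2 p g r : D2 p -> (forall a, g a <= r * indicator p a) -> sfun_ub g (r * m2 p).
Proof.
  intros Hp H. exists nil, ((r, p) :: nil), 0. repeat split; simpl.
  - intros ? [].
  - intros x [<-|[]]; auto.
  - intro a; specialize (H a); lra.
  - lra.
Qed.

Lemma bounded_fun_indicator (p : formula U) : bounded_fun (indicator p).
Proof.
  exists 1; intro a; unfold indicator.
  destruct excluded_middle_informative; rewrite ?Rabs_R1, ?Rabs_R0; lra.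
Qed.

Theorem amalgamation : exists m : formula U -> R,
  measure_on (fun _ => True) m /\ (forall p, D1 p -> m p = m1 p) /\ (forall p, D2 p -> m p = m2 p).
Proof.
  destruct (hahn_banach sfun_ub_add sfun_ub_scale sfun_ub_bounded sfun_ub_zero)
    as [F [F_add [F_scale F_ub]]].
  assert (F_le : forall p t, sfun_ub (indicator p) t -> F (indicator p) <= t)
    by (intros p t Hub; apply F_ub; auto using bounded_fun_indicator).
  assert (F_ge : forall p t, sfun_ub (fun a => -1 * indicator p a) (-1 * t) ->
                             t <= F (indicator p)).
  { intros p t Hub. assert (Hb : bounded_fun (fun a => -1 * indicator p a)).
    { destruct (bounded_fun_indicator p) as [M HM]. exists M; intro a.
      rewrite Rabs_mult. replace (Rabs (-1)) with 1 by (unfold Rabs; destruct Rcase_abs; lra).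
      specialize (HM a); lra. }
    specialize (F_ub _ _ Hb Hub). rewrite F_scale in F_ub by apply bounded_fun_indicator. lra. }
  exists (fun p => F (indicator p)). repeat split.
  - intros p q _ _ Heq. f_equal. apply functional_extensionality; intro a. unfold indicator.
    destruct excluded_middle_informative as [h1|h1], excluded_middle_informative as [h2|h2];
      auto; exfalso; [apply h2|apply h1]; apply Heq; auto.
  - intros p _. apply F_ge. apply sfun_ub_const. intro a; unfold indicator.
    destruct excluded_middle_informative; lra.
  - apply Rle_antisym; [apply F_le | apply F_ge]; apply sfun_ub_const; intro a;
      rewrite indicator_sat by apply sat_fTrue; lra.
  - intros p q _ _ Hdis.
    replace (indicator (fOr p q)) with (fun a => indicator p a + indicator q a).
    + apply F_add; apply bounded_fun_indicator.
    + apply functional_extensionality; intro a. specialize (Hdis a). unfold indicator.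
      do 3 destruct excluded_middle_informative; rewrite ?sat_fOr in *; try tauto; lra.
  - intros p Hp. apply Rle_antisym.
    + rewrite <- (Rmult_1_l (m1 p)). apply F_le, sfun_ub_D1; auto. intro; lra.
    + apply F_ge, sfun_ub_D1; auto. intro; lra.
  - intros p Hp. apply Rle_antisym.
    + rewrite <- (Rmult_1_l (m2 p)). apply F_le, sfun_ub_D2; auto. intro; lra.
    + apply F_ge, sfun_ub_D2; auto. intro; lra.
Qed.

End Amalgamation.

(** * Gluing Keisler measures *)

Section Gluing.
Context {L : signature} {U : structure L}.

Lemma LF_fAll_block (B : U -> Prop) n m N p :
  LF B N p -> LF B N (fAll_block n m p).
Proof. apply LF_fAll_over; lia. Qed.

Lemma LF_fAll_block_below (B : U -> Prop) n m p :
  LF B (n + m) p -> LF B n (fAll_block n m p).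
Proof. apply LF_fAll_over; lia. Qed.

Lemma extend_with_marginal (A : U -> Prop) n m (lam mu : formula U -> R) :
  isKM A (n + m) lam -> isKM (allU U) n mu -> (forall p, LF A n p -> lam p = mu p) ->
  exists om, measure_on (fun _ => True) om /\
    (forall p, LF (allU U) n p -> om p = mu p) /\ (forall p, LF A (n + m) p -> om p = lam p).
Proof.
  intros Hlam Hmu Hagree.
  destruct (amalgamation (LF (allU U) n) (LF A (n + m)) mu lam
              (fun i => i < n \/ n + m <= i)%nat (formula_algebra_LF _ _)
              (formula_algebra_LF _ _) Hmu Hlam) with (proj := fAll_block (U := U) n m)
    as [om Hom]; eauto.
  - intros p [Hb _].
    eapply depends_only_mono; [|apply depends_only_fbound, Hb]. intros i Hi; now left.
  - intros q Hq. split; [|split].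
    + apply (LF_allU A), LF_fAll_block_below, Hq.
    + apply LF_fAll_block, Hq.
    + intro a; apply sat_fAll_block.
  - intros p [Hb _] [_ Hp]. symmetry; apply Hagree; split; auto.
Qed.

Lemma glue_along_marginal n m k (w1 w2 : formula U -> R) :
  measure_on (fun _ => True) w1 -> measure_on (fun _ => True) w2 ->
  (forall q, LF (allU U) m q -> w1 (flift 0 n q) = w2 q) ->
  exists rho, measure_on (fun _ => True) rho /\
    (forall p, LF (allU U) (n + m) p -> rho p = w1 p) /\
    (forall q, LF (allU U) (m + k) q -> rho (flift 0 n q) = w2 q).
Proof.
  intros Hw1 Hw2 Hmarg.
  set (D2 := fun p => LF (allU U) (n + m + k) p /\ depends_only (fun i => n <= i)%nat p).
  assert (HD2 : formula_algebra D2)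
    by (apply formula_algebra_and; [apply formula_algebra_LF | apply formula_algebra_depends_only]).
  assert (Hm2 : measure_on D2 (fun p => w2 (fAll_low n p))).
  { apply (measure_on_comap (fun _ => True) D2 w2 (fAll_low n) (fun a i => a (i - n)%nat));
      auto.
    - repeat split; auto.
    - intros p [_ Hp] a. now apply sat_fAll_low. }
  destruct (amalgamation (LF (allU U) (n + m)) D2 w1 _
              (fun i => i < n + m \/ n + m + k <= i)%nat (formula_algebra_LF _ _) HD2
              (measure_on_sub _ _ _ Hw1 (fun _ _ => I)) Hm2)
    with (proj := fAll_block (U := U) (n + m) k)
    as [rho [Hrho [H1 H2]]].
  - intros p [Hb _].
    eapply depends_only_mono; [|apply depends_only_fbound, Hb]. intros i Hi; now left.
  - intros q [Hq Hqn]. split; [|split; [split|]].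
    + apply LF_fAll_block_below, Hq.
    + apply LF_fAll_block, Hq.
    + apply depends_only_fAll_block_above; auto; lia.
    + intro a; apply sat_fAll_block.
  - intros p Hp [_ Hpn].
    assert (Hlow : LF (allU U) m (fAll_low n p))
      by (apply (LF_fAll_over (allU U) 0 n n (n + m)); auto; lia).
    rewrite <- Hmarg by auto. apply (measure_equiv Hw1); auto.
    intro a; symmetry; now apply lift_fAll_low_equiv.
  - exists rho; split; [|split]; auto. intros q Hq. rewrite H2.
    + apply (measure_equiv Hw2); auto. apply fAll_low_lift_equiv.
    + split; [|apply depends_only_lift_low].
      replace (n + m + k)%nat with (m + k + n)%nat by lia. apply LF_lift, Hq.
Qed.

Lemma amalgamate_middle n m k (C : U -> Prop) (om rho : formula U -> R) :
  isKM (allU U) (n + k) om -> measure_on (fun _ => True) rho ->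
  (forall q, LF C (n + k) q -> om q = rho (flift n m q)) ->
  exists rho', measure_on (fun _ => True) rho' /\
    (forall p, LF C (n + m + k) p -> rho' p = rho p) /\
    (forall q, LF (allU U) (n + k) q -> rho' (flift n m q) = om q).
Proof.
  intros Hom Hrho Hagree.
  set (P := fun i => (i < n \/ n + m <= i)%nat).
  set (D1 := fun p => LF (allU U) (n + m + k) p /\ depends_only P p).
  assert (HD1 : formula_algebra D1)
    by (apply formula_algebra_and; [apply formula_algebra_LF | apply formula_algebra_depends_only]).
  assert (HT : forall (B : U -> Prop) p, LF B (n + m + k) p -> LF B (n + k) (fAll_mid n m p))
    by (intros B p Hp; apply (LF_fAll_over B n m m (n + m + k)); auto; lia).
  assert (Hm1 : measure_on D1 (fun p => om (fAll_mid n m p))).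
  { apply (measure_on_comap (LF (allU U) (n + k)) D1 om (fAll_mid n m)
             (fun a i => a (if Nat.ltb i n then i else i - m)%nat)); auto.
    - apply formula_algebra_LF.
    - intros p [Hp _]; auto.
    - intros p [_ Hp] a. now apply sat_fAll_mid. }
  destruct (amalgamation D1 (LF C (n + m + k)) _ rho P HD1 (formula_algebra_LF _ _) Hm1
              (measure_on_sub _ _ _ Hrho (fun _ _ => I))) with (proj := fAll_block (U := U) n m)
    as [rho' [Hrho' [H1 H2]]].
  - intros p [_ Hp]; exact Hp.
  - intros q Hq. split; [split|split].
    + apply (LF_allU C), LF_fAll_block, Hq.
    + apply depends_only_fAll_block.
    + apply LF_fAll_block, Hq.
    + intro a; apply sat_fAll_block.
  - intros p [_ Hp] Hpc. rewrite Hagree by auto.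
    apply (measure_equiv Hrho); auto. intro a; now apply lift_fAll_mid_equiv.
  - exists rho'; split; [|split]; auto. intros q Hq. rewrite H1.
    + apply (measure_equiv Hom); auto.
      * apply HT. replace (n + m + k)%nat with (n + k + m)%nat by lia. apply LF_lift, Hq.
      * apply fAll_mid_lift_equiv.
    + split; [|apply depends_only_lift].
      replace (n + m + k)%nat with (n + k + m)%nat by lia. apply LF_lift, Hq.
Qed.

End Gluing.

(** * Cardinal arithmetic *)

Definition card_le (X Y : Type) : Prop := exists f : X -> Y, forall u v, f u = f v -> u = v.

Lemma card_le_refl (X : Type) : card_le X X.
Proof. now exists (fun x => x). Qed.

Lemma card_le_trans {X Y Z : Type} : card_le X Y -> card_le Y Z -> card_le X Z.
Proof. intros [f Hf] [g Hg]. exists (fun x => g (f x)). auto. Qed.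

Lemma card_le_sum {X Y X' Y' : Type} : card_le X X' -> card_le Y Y' -> card_le (X + Y) (X' + Y').
Proof.
  intros [f Hf] [g Hg].
  exists (fun s => match s with inl x => inl (f x) | inr y => inr (g y) end).
  intros [u|u] [v|v] E; inversion E; f_equal; auto.
Qed.

Lemma card_le_prod_bool {X Y : Type} : card_le X Y -> card_le (bool * X) (bool * Y).
Proof.
  intros [f Hf]. exists (fun p => (fst p, f (snd p))).
  intros [b x] [b' x'] E; inversion E; f_equal; auto.
Qed.

Lemma card_le_sum_prod_bool (X : Type) : card_le (X + X) (bool * X).
Proof.
  exists (fun s => match s with inl x => (true, x) | inr x => (false, x) end).
  intros [u|u] [v|v] E; inversion E; auto.
Qed.

Lemma sig_ext {X : Type} {S : X -> Prop} (u v : {x | S x}) : proj1_sig u = proj1_sig v -> u = v.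
Proof. destruct u, v; simpl; intros ->; now apply subset_eq_compat. Qed.

Lemma card_le_sig {X : Type} (S : X -> Prop) : card_le {x | S x} X.
Proof. exists (@proj1_sig _ S). exact sig_ext. Qed.

Lemma card_le_of_rel {X Y : Type} (G : X -> Y -> Prop) : (forall x, exists y, G x y) ->
  (forall x x' y, G x y -> G x' y -> x = x') -> card_le X Y.
Proof.
  intros Htot Hinj.
  exists (fun x => proj1_sig (constructive_indefinite_description _ (Htot x))).
  intros u v E.
  destruct (constructive_indefinite_description _ (Htot u)) as [yu Hu],
    (constructive_indefinite_description _ (Htot v)) as [yv Hv]; simpl in E; subst.
  eauto.
Qed.

Lemma card_le_split {X : Type} (S : X -> Prop) :
  card_le {x | ~ S x} {x | S x} -> card_le X (bool * {x | S x}).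
Proof.
  intros [r Hr].
  exists (fun x => match excluded_middle_informative (S x) with
                   | left H => (true, exist S x H)
                   | right H => (false, r (exist _ x H)) end).
  intros u v E.
  destruct excluded_middle_informative, excluded_middle_informative;
    inversion E as [[E']]; auto.
  apply Hr in E'. now inversion E'.
Qed.

Section Comparability.
Variables X Y : Type.

Definition partial_injection (G : X -> Y -> Prop) : Prop :=
  (forall x y y', G x y -> G x y' -> y = y') /\ (forall x x' y, G x y -> G x' y -> x = x').

Record pinj := { pinj_rel : X -> Y -> Prop; pinj_ok : partial_injection pinj_rel }.

Lemma card_le_total : card_le X Y \/ card_le Y X.
Proof.
  assert (Hempty : partial_injection (fun _ _ => False)) by (split; contradiction).
  destruct (@zorn_preorder pinj (Build_pinj _ Hempty)
              (fun s t => forall x y, pinj_rel s x y -> pinj_rel t x y)) as [t Ht].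
  - auto.
  - auto.
  - intros A HA.
    assert (Hg : partial_injection (fun x y => exists s, A s /\ pinj_rel s x y)).
    { split.
      - intros x y y' [s [Hs H1]] [s' [Hs' H2]].
        destruct (HA s s' Hs Hs'); [apply (pinj_ok s') with x | apply (pinj_ok s) with x]; auto.
      - intros x x' y [s [Hs H1]] [s' [Hs' H2]].
        destruct (HA s s' Hs Hs'); [apply (pinj_ok s') with y | apply (pinj_ok s) with y]; auto. }
    exists (Build_pinj _ Hg). intros s Hs x y H; simpl; eauto.
  - destruct (pinj_ok t) as [Hfun Hinj].
    destruct (classic (forall x, exists y, pinj_rel t x y)) as [Hx|Hx];
      [left; now apply (card_le_of_rel _ Hx) |].
    destruct (classic (forall y, exists x, pinj_rel t x y)) as [Hy|Hy].
    { right. apply (card_le_of_rel (fun y x => pinj_rel t x y)); auto.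
      intros y y' x H1 H2; eauto. }
    exfalso. apply not_all_ex_not in Hx as [x0 Hx0]. apply not_all_ex_not in Hy as [y0 Hy0].
    assert (Hg : partial_injection (fun x y => pinj_rel t x y \/ (x = x0 /\ y = y0))).
    { split.
      - intros x y y' [H1|[-> ->]] [H2|[E ->]]; subst; eauto; exfalso; eauto.
      - intros x x' y [H1|[-> ->]] [H2|[-> E]]; subst; eauto; exfalso; eauto. }
    apply Hy0. exists x0. apply (Ht (Build_pinj _ Hg)); simpl; auto.
Qed.

End Comparability.

Section Doubling.
Local Set Implicit Arguments.
Local Unset Strict Implicit.
Variable X : Type.

(** A partial doubling: an injection [H : bool * S -> S] for some [S]. *)
Record doubling (H : bool * X -> X -> Prop) : Prop := {
  doubling_fun : forall p y y', H p y -> H p y' -> y = y';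
  doubling_inj : forall p p' y, H p y -> H p' y -> p = p';
  doubling_tf : forall x, (exists y, H (true, x) y) <-> (exists y, H (false, x) y);
  doubling_range : forall p y, H p y -> exists y', H (true, y) y' }.

Definition doubling_dom (H : bool * X -> X -> Prop) (x : X) : Prop := exists y, H (true, x) y.

Lemma doubling_dom_of H b x y : doubling H -> H (b, x) y -> doubling_dom H x.
Proof. intros Hd Hxy. destruct b; [exists y; auto | apply (doubling_tf Hd); eauto]. Qed.

Lemma doubling_dom_range H p y : doubling H -> H p y -> doubling_dom H y.
Proof. intros Hd Hy; exact (doubling_range Hd Hy). Qed.

Definition seq_doubling (e : nat -> X) (p : bool * X) (y : X) : Prop :=
  exists n, snd p = e n /\ y = e (if fst p then 2 * n else 2 * n + 1)%nat.

Lemma doubling_seq e : (forall u v, e u = e v -> u = v) -> doubling (seq_doubling e).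
Proof.
  intro He. split.
  - intros [b x] y y' [n [Hx Hy]] [n' [Hx' Hy']]; simpl in *.
    rewrite Hx in Hx'. apply He in Hx'. now subst.
  - intros [b x] [b' x'] y [n [Hx Hy]] [n' [Hx' Hy']]; simpl in *. subst.
    apply He in Hy'. destruct b, b'; f_equal; try lia; f_equal; lia.
  - intro x; split; intros [y [n [Hx _]]];
      [exists (e (2 * n + 1)%nat) | exists (e (2 * n)%nat)]; exists n; auto.
  - intros p y [n [_ ->]]. eexists; eexists; split; simpl; eauto.
Qed.

Lemma doubling_union H1 H2 : doubling H1 -> doubling H2 ->
  (forall x, doubling_dom H1 x -> doubling_dom H2 x -> False) ->
  doubling (fun p y => H1 p y \/ H2 p y).
Proof.
  intros Hd1 Hd2 Hdisj. split.
  - intros [b x] y y' [H|H] [H'|H'];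
      [eapply (doubling_fun Hd1) | | | eapply (doubling_fun Hd2)]; eauto;
      exfalso; apply (Hdisj x); eapply doubling_dom_of; eauto.
  - intros p p' y [H|H] [H'|H'];
      [eapply (doubling_inj Hd1) | | | eapply (doubling_inj Hd2)]; eauto;
      exfalso; apply (Hdisj y); eapply doubling_dom_range; eauto.
  - intro x; split; intros [y [H|H]].
    + destruct (proj1 (doubling_tf Hd1 x)) as [y' Hy']; eauto.
    + destruct (proj1 (doubling_tf Hd2 x)) as [y' Hy']; eauto.
    + destruct (proj2 (doubling_tf Hd1 x)) as [y' Hy']; eauto.
    + destruct (proj2 (doubling_tf Hd2 x)) as [y' Hy']; eauto.
  - intros p y [H|H]; [destruct (doubling_range Hd1 H) | destruct (doubling_range Hd2 H)];
      eauto.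
Qed.

Lemma card_le_doubling_dom H : doubling H ->
  card_le (bool * {x | doubling_dom H x}) {x | doubling_dom H x}.
Proof.
  intro Hd.
  apply (card_le_of_rel (fun p y => H (fst p, proj1_sig (snd p)) (proj1_sig y))).
  - intros [b [x Hx]]; simpl.
    assert (Hb : exists y, H (b, x) y) by (destruct b; [|apply (doubling_tf Hd)]; exact Hx).
    destruct Hb as [y Hy].
    exists (exist _ y (doubling_dom_range Hd Hy)); auto.
  - intros [b [x Hx]] [b' [x' Hx']] [y Hy]; simpl; intros H1 H2.
    assert (Hinj := doubling_inj Hd H1 H2). inversion Hinj; subst.
    f_equal. now apply subset_eq_compat.
Qed.

Section Maximal.
Variable e : nat -> X.
Hypothesis e_inj : forall u v, e u = e v -> u = v.

Record pdoubling := {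
  pd_rel : bool * X -> X -> Prop;
  pd_ok : doubling pd_rel;
  pd_base : forall p y, seq_doubling e p y -> pd_rel p y }.

Definition pd_le (s t : pdoubling) : Prop := forall p y, pd_rel s p y -> pd_rel t p y.

Lemma maximal_doubling : exists t, forall s, pd_le t s -> pd_le s t.
Proof.
  apply (@zorn_preorder _ (Build_pdoubling (doubling_seq e_inj) (fun p y H => H))).
  - intros t p y; auto.
  - intros r s t H1 H2 p y H; auto.
  - intros A HA. destruct (classic (exists s, A s)) as [[s0 Hs0]|Hn].
    2: { exists (Build_pdoubling (doubling_seq e_inj) (fun p y H => H)).
         intros s Hs; exfalso; eauto. }
    assert (Hg : doubling (fun p y => exists s, A s /\ pd_rel s p y)).
    { split.
      - intros p y y' [s [Hs H1]] [s' [Hs' H2]].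
        destruct (HA s s' Hs Hs');
          [apply (doubling_fun (pd_ok s')) with p | apply (doubling_fun (pd_ok s)) with p]; auto.
      - intros p p' y [s [Hs H1]] [s' [Hs' H2]].
        destruct (HA s s' Hs Hs');
          [apply (doubling_inj (pd_ok s')) with y | apply (doubling_inj (pd_ok s)) with y]; auto.
      - intro x; split; intros [y [s [Hs H1]]].
        + destruct (proj1 (doubling_tf (pd_ok s) x)) as [y' Hy']; eauto.
        + destruct (proj2 (doubling_tf (pd_ok s) x)) as [y' Hy']; eauto.
      - intros p y [s [Hs H1]]. destruct (doubling_range (pd_ok s) H1) as [y' Hy']; eauto. }
    exists (Build_pdoubling Hg (fun p y H => ex_intro _ s0 (conj Hs0 (pd_base s0 H)))).
    intros s Hs p y H; simpl; eauto.
Qed.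

(** Otherwise the maximal doubling could be enlarged by a doubling of the
    sequence [e']. *)
Lemma maximal_doubling_complement t : (forall s, pd_le t s -> pd_le s t) ->
  ~ exists e' : nat -> X, (forall u v, e' u = e' v -> u = v) /\
                          (forall n, ~ doubling_dom (pd_rel t) (e' n)).
Proof.
  intros Hmax [e' [He' Hout]].
  assert (Hu : doubling (fun p y => pd_rel t p y \/ seq_doubling e' p y)).
  { apply doubling_union; [apply pd_ok | now apply doubling_seq |].
    intros x Hx [y [n [Hn _]]]; simpl in Hn; subst x. exact (Hout n Hx). }
  set (t' := Build_pdoubling Hu (fun p y H => or_introl (pd_base t H))).
  apply (Hout 0%nat). exists (e' 0%nat).
  apply (Hmax t' (fun p y H => or_introl H)); simpl.
  right; exists 0%nat; auto.
Qed.

Lemma maximal_doubling_complement_le t : (forall s, pd_le t s -> pd_le s t) ->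
  card_le {x | ~ doubling_dom (pd_rel t) x} {x | doubling_dom (pd_rel t) x}.
Proof.
  intro Hmax. set (S := doubling_dom (pd_rel t)).
  assert (e_S : forall n, S (e n)).
  { intro n. exists (e (2 * n)%nat). apply (pd_base t). exists n; auto. }
  destruct (card_le_total {x | ~ S x} {x | S x}) as [|[g Hg]]; auto. exfalso.
  apply (maximal_doubling_complement Hmax).
  exists (fun n => proj1_sig (g (exist S (e n) (e_S n)))). split.
  - intros u v E. apply e_inj.
    assert (E' : g (exist S (e u) (e_S u)) = g (exist S (e v) (e_S v))) by now apply sig_ext.
    apply Hg in E'. now inversion E'.
  - intro n. apply (proj2_sig (g (exist S (e n) (e_S n)))).
Qed.

End Maximal.

Lemma card_le_double : card_le nat X -> card_le (X + X) X.
Proof.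
  intros [e e_inj].
  destruct (maximal_doubling e_inj) as [t Hmax].
  assert (HS := card_le_doubling_dom (pd_ok t)).
  assert (HX := card_le_split _ (maximal_doubling_complement_le e_inj Hmax)).
  eapply card_le_trans; [apply card_le_sum_prod_bool|].
  eapply card_le_trans; [exact (card_le_prod_bool HX)|].
  eapply card_le_trans; [exact (card_le_prod_bool HS)|].
  eapply card_le_trans; [apply HS | apply card_le_sig].
Qed.

End Doubling.

Lemma card_le_sum_cases {K Y Z : Type} : card_le K (Y + Z) ->
  card_le K Y \/ card_le K Z \/ card_le K nat.
Proof.
  assert (Hself : forall W, card_le K (W + W) -> card_le K W \/ card_le K nat).
  { intros W HK. destruct (card_le_total nat W) as [Hn|Hn].
    - left. eapply card_le_trans; [exact HK | now apply card_le_double].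
    - right. eapply card_le_trans; [exact HK|].
      eapply card_le_trans; [exact (card_le_sum Hn Hn)|].
      apply card_le_double, card_le_refl. }
  intro HK. destruct (card_le_total Y Z) as [HYZ|HZY].
  - destruct (Hself Z); auto.
    eapply card_le_trans; [exact HK | exact (card_le_sum HYZ (card_le_refl Z))].
  - destruct (Hself Y); auto.
    eapply card_le_trans; [exact HK | exact (card_le_sum (card_le_refl Y) HZY)].
Qed.

Lemma card_le_union {T : Type} (A B : T -> Prop) :
  card_le {x | A x \/ B x} ({x | A x} + {x | B x}).
Proof.
  exists (fun s => match excluded_middle_informative (A (proj1_sig s)) with
                   | left H => inl (exist _ _ H)
                   | right H => inr (exist _ _ (or_ind (fun a => False_ind _ (H a)) (fun b => b)
                                                       (proj2_sig s)))
                   end).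
  intros [u Hu] [v Hv] E; simpl in E.
  destruct excluded_middle_informative, excluded_middle_informative; inversion E;
    subst; now apply subset_eq_compat.
Qed.

Lemma small_union {L : signature} {U : structure L} K (A B : U -> Prop) :
  big L K -> small U K A -> small U K B -> small U K (fun x => A x \/ B x).
Proof.
  intros [Hbig Hnbig] [HA HnA] [HB HnB].
  assert (Hnat : card_le nat (nat + funcs L + rels L))
    by (exists (fun n => inl (inl n)); intros u v E; now inversion E).
  split.
  - change (card_le {x | A x \/ B x} K).
    eapply card_le_trans; [apply card_le_union|].
    eapply card_le_trans; [exact (card_le_sum HA HB)|].
    apply card_le_double, (card_le_trans Hnat Hbig).
  - intro HK.
    assert (HK' : card_le K ({x | A x} + {x | B x}))
      by (eapply card_le_trans; [exact HK | apply card_le_union]).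
    destruct (card_le_sum_cases HK') as [H|[H|H]];
      [apply HnA | apply HnB | apply Hnbig, (card_le_trans H Hnat)]; exact H.
Qed.

(** * The preorder *)

Section Preorder.
Context {L : signature} {U : structure L}.

Fixpoint fdiag (n j : nat) : formula U :=
  match j with
  | 0 => fTrue U
  | S j => fAnd (fEq (tvar U j) (tvar U (n + j))) (fdiag n j)
  end.

Lemma sat_fdiag n j (a : nat -> U) :
  sat a (fdiag n j) <-> forall i, (i < j)%nat -> a i = a (n + i)%nat.
Proof.
  induction j; simpl.
  - split; [intros _ i Hi; lia | intros _; tauto].
  - rewrite IHj. split.
    + intros [H1 H2] i Hi. destruct (Nat.eq_dec i j); [now subst | apply H2; lia].
    + intro H; split; auto.
Qed.

Lemma LF_fdiag (B : U -> Prop) n j : (j <= n)%nat -> LF B (n + n) (fdiag n j).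
Proof.
  induction j; intro Hj; simpl.
  - split; simpl; auto.
  - destruct IHj as [H1 H2]; [lia|]. split; simpl; repeat split; auto; lia.
Qed.

Definition diag_ren (n i : nat) : nat := if Nat.ltb i n then i else (i - n)%nat.

Lemma small_empty K : inhabited K -> small U K (fun _ => False).
Proof.
  intros [k0]. split.
  - exists (fun s => False_rect K (proj2_sig s)). intros [u Hu]; destruct Hu.
  - intros [g _]. exact (proj2_sig (g k0)).
Qed.

Lemma measure_lift_diag n (om : formula U -> R) q : measure_on (LF (allU U) (n + n)) om ->
  om (fdiag n n) = 1 -> LF (allU U) n q -> om (flift 0 n q) = om q.
Proof.
  intros Hom Hone Hq.
  assert (HD := formula_algebra_LF (allU U) (n + n)).
  assert (Hdg : LF (allU U) (n + n) (fdiag n n)) by (apply LF_fdiag; lia).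
  assert (Hq2 : LF (allU U) (n + n) (flift 0 n q)) by now apply LF_lift.
  assert (Hq3 : LF (allU U) (n + n) q) by (eapply LF_mono; [| |exact Hq]; auto; lia).
  rewrite (measure_and_full HD Hom _ _ Hq2 Hdg Hone), (measure_and_full HD Hom _ _ Hq3 Hdg Hone).
  apply (measure_equiv Hom); try (apply (alg_and HD); auto).
  intro a; simpl. rewrite sat_fdiag, sat_lift.
  split; intros [H1 H2]; split; auto; revert H1; apply (sat_ext q n); try apply Hq;
    intros i Hi; rewrite (H2 i Hi); unfold shift_ren; simpl; f_equal; lia.
Qed.

Lemma geE_refl K n (mu : formula U -> R) : inhabited K -> isKM (allU U) n mu -> geE K n n mu mu.
Proof.
  intros HK Hmu. exists (fun _ => False). split; [now apply small_empty|].
  assert (Hdiag : forall B p, LF B (n + n) p -> LF (allU U) n (frename (diag_ren n) p)).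
  { intros B p [Hb _]. split; [|apply fparams_allU]. eapply fbound_rename; [|exact Hb].
    intros i Hi. unfold diag_ren. destruct (Nat.ltb_spec i n); lia. }
  exists (fun p => mu (frename (diag_ren n) p)). split; [|split].
  - apply (measure_on_comap (LF (allU U) n) _ mu _ (fun a i => a (diag_ren n i)));
      auto using formula_algebra_LF.
    + intros p Hp; eauto.
    + intros p _ a; apply sat_rename.
  - intros p Hp. apply (measure_equiv Hmu).
    + apply (Hdiag (fun _ => False)), (LF_mono (fun _ => False) _ n); auto; lia.
    + now apply (LF_allU (fun _ => False)).
    + intro a. rewrite sat_rename. apply (sat_ext p n); [apply Hp|].
      intros i Hi. unfold diag_ren. destruct (Nat.ltb_spec i n); [auto|lia].
  - intros om Hom Hlam Hx q Hq. rewrite <- (Hx q Hq).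
    apply measure_lift_diag; auto. rewrite Hlam by (apply LF_fdiag; lia).
    rewrite <- (measure_true Hmu).
    apply (measure_equiv Hmu); [apply (Hdiag (allU U)), LF_fdiag; lia | split; simpl; auto|].
    intro a. rewrite sat_rename, sat_fdiag. split; [intros; apply sat_fTrue|].
    intros _ i Hi. unfold diag_ren. destruct (Nat.ltb_spec i n); [|lia].
    destruct (Nat.ltb_spec (n + i) n); [lia|]. f_equal; lia.
Qed.

Section Transitivity.
Variables (K : Type) (n m k : nat) (mu nu eta : formula U -> R).
Hypothesis Hbig : big L K.
Hypothesis Hmu : isKM (allU U) n mu.
Hypothesis Hnu : isKM (allU U) m nu.
Variables (A B : U -> Prop) (lam1 lam2 : formula U -> R).
Hypothesis Hlam1 : isKM A (n + m) lam1.
Hypothesis Hlam1_x : forall p, LF A n p -> lam1 p = mu p.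
Hypothesis Hlam1_y : forall om, isKM (allU U) (n + m) om ->
  (forall p, LF A (n + m) p -> om p = lam1 p) ->
  (forall p, LF (allU U) n p -> om p = mu p) ->
  forall q, LF (allU U) m q -> om (flift 0 n q) = nu q.
Hypothesis Hlam2 : isKM B (m + k) lam2.
Hypothesis Hlam2_y : forall p, LF B m p -> lam2 p = nu p.
Hypothesis Hlam2_z : forall om, isKM (allU U) (m + k) om ->
  (forall p, LF B (m + k) p -> om p = lam2 p) ->
  (forall p, LF (allU U) m p -> om p = nu p) ->
  forall q, LF (allU U) k q -> om (flift 0 m q) = eta q.

Let C := fun x => A x \/ B x.

Lemma glued_witness : exists rho, measure_on (fun _ => True) rho /\
  (forall p, LF A (n + m) p -> rho p = lam1 p) /\
  (forall p, LF (allU U) n p -> rho p = mu p) /\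
  (forall q, LF B (m + k) q -> rho (flift 0 n q) = lam2 q).
Proof.
  destruct (extend_with_marginal A n m lam1 mu Hlam1 Hmu Hlam1_x) as [w1 [Hw1 [Hw1_x Hw1_A]]].
  destruct (extend_with_marginal B m k lam2 nu Hlam2 Hnu Hlam2_y) as [w2 [Hw2 [Hw2_y Hw2_B]]].
  destruct (glue_along_marginal n m k w1 w2 Hw1 Hw2) as [rho [Hrho [Hrho1 Hrho2]]].
  { intros q Hq. rewrite Hw2_y by auto.
    apply Hlam1_y; auto. now apply (measure_on_sub _ _ _ Hw1). }
  exists rho; split; [|split; [|split]]; auto.
  - intros p Hp. rewrite Hrho1; auto. now apply (LF_allU A).
  - intros p Hp. rewrite Hrho1, Hw1_x; auto. eapply LF_mono; [| |exact Hp]; auto; lia.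
  - intros q Hq. rewrite Hrho2, Hw2_B; auto. now apply (LF_allU B).
Qed.

Lemma z_marginal_of_extension (rho om : formula U -> R) : measure_on (fun _ => True) rho ->
  (forall p, LF A (n + m) p -> rho p = lam1 p) ->
  (forall q, LF B (m + k) q -> rho (flift 0 n q) = lam2 q) ->
  isKM (allU U) (n + k) om -> (forall p, LF C (n + k) p -> om p = rho (flift n m p)) ->
  (forall p, LF (allU U) n p -> om p = mu p) ->
  forall r, LF (allU U) k r -> om (flift 0 n r) = eta r.
Proof.
  intros Hrho Hrho_A Hrho_B Hom Hom_C Hom_x r Hr.
  destruct (amalgamate_middle n m k C om rho Hom Hrho Hom_C) as [rho' [Hrho' [Hrho'_C Hrho'_xz]]].
  assert (HAC : forall p, LF A (n + m) p -> LF C (n + m + k) p)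
    by (intros p Hp; eapply LF_mono; [| |exact Hp]; [left; auto | lia]).
  assert (Hy : forall q, LF (allU U) m q -> rho' (flift 0 n q) = nu q).
  { apply Hlam1_y.
    - now apply (measure_on_sub _ _ _ Hrho').
    - intros p Hp. rewrite Hrho'_C, Hrho_A; auto.
    - intros p Hp. rewrite <- Hom_x, <- Hrho'_xz by (eapply LF_mono; [| |exact Hp]; auto; lia).
      apply (measure_equiv Hrho'); auto. intro a; symmetry; apply lift_bounded_equiv, Hp. }
  assert (Hz : rho' (flift 0 n (flift 0 m r)) = eta r).
  { apply (Hlam2_z (fun q => rho' (flift 0 n q))); auto.
    - apply (measure_on_comap (fun _ => True) _ rho' (flift 0 n) (fun a i => a (shift_ren 0 n i)));
        auto using formula_algebra_LF.
      + repeat split.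
      + intros p _ a; apply sat_lift.
    - intros q Hq. rewrite Hrho'_C, Hrho_B; auto.
      replace (n + m + k)%nat with (m + k + n)%nat by lia.
      apply LF_lift. eapply LF_mono; [| |exact Hq]; [right; auto | lia]. }
  rewrite <- Hz, <- Hrho'_xz.
  - apply (measure_equiv Hrho'); auto. apply lift_lift_equiv.
  - replace (n + k)%nat with (k + n)%nat by lia. now apply LF_lift.
Qed.

Lemma geE_of_witnesses : small U K A -> small U K B -> geE K n k mu eta.
Proof.
  intros HA HB. exists C. split; [now apply small_union|].
  destruct glued_witness as [rho [Hrho [Hrho_A [Hrho_x Hrho_B]]]].
  exists (fun p => rho (flift n m p)). split; [|split].
  - apply (measure_on_comap (fun _ => True) _ rho (flift n m) (fun a i => a (shift_ren n m i)));
      auto using formula_algebra_LF.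
    + repeat split.
    + intros p _ a; apply sat_lift.
  - intros p Hp. rewrite <- Hrho_x by now apply (LF_allU C).
    apply (measure_equiv Hrho); auto. apply lift_bounded_equiv, Hp.
  - intros om Hom Hom_C Hom_x. now apply (z_marginal_of_extension rho om).
Qed.

End Transitivity.

Lemma geE_trans K n m k (mu nu eta : formula U -> R) : big L K ->
  isKM (allU U) n mu -> isKM (allU U) m nu ->
  geE K n m mu nu -> geE K m k nu eta -> geE K n k mu eta.
Proof.
  intros Hbig Hmu Hnu [A [HA [lam1 [H1 [H1x H1y]]]]] [B [HB [lam2 [H2 [H2y H2z]]]]].
  eapply geE_of_witnesses; eauto.
Qed.

End Preorder.

Theorem theorem3p13 :
  forall (L : signature) (U : structure L) (K : Type),
    monster U K ->
    (forall (n : nat) (mu : formula U -> R),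
        @isKM L U (allU U) n mu -> @geE L U K n n mu mu) /\
    (forall (n m k : nat) (mu nu eta : formula U -> R),
        @isKM L U (allU U) n mu -> @isKM L U (allU U) m nu -> @isKM L U (allU U) k eta ->
        @geE L U K n m mu nu -> @geE L U K m k nu eta -> @geE L U K n k mu eta).
Proof.
  intros L U K [Hbig _]. split.
  - intros n mu Hmu. apply geE_refl; auto.
    destruct Hbig as [[f _] _]. exact (inhabits (f (inl (inl 0%nat)))).
  - intros n m k mu nu eta Hmu Hnu _. now apply geE_trans.
Qed.
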